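(* On a Real RAM, for an embedded, vertex-weighted star $S$ it can be decided in linear time whether $S$ has a weighted disk contact representation respecting the embedding, and such a representation (if one exists) can be constructed in linear time.
   Context: A disk contact representation of a graph $G=(V,E)$ is a set of interior-disjoint closed disks in the plane together with a bijection between $V$ and the disks such that two disks touch if and only if the corresponding vertices are adjacent. Given positive vertex weights $w(v)$, a weighted disk contact representation is one in which the disk representing each vertex $v$ has radius proportional to $w(v)$. A star is a tree consisting of one central vertex adjacent to all other vertices (leaves). The star is embedded if a cyclic order of the leaves around the central vertex is prescribed; a representation respects the embedding if the leaf disks touch the central disk in this cyclic order. The Real RAM model assumes that basic arithmetic operations, including square roots and trigonometric functions, on real numbers take constant time. *)

From Stdlib Require Import Reals ZArith List.
Open Scope R_scope.

(* The star has a central vertex and n leaves 0..n-1; the leaves are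
   listed in the prescribed cyclic (counterclockwise) order.  Weights:
   w0 for the centre, w i for leaf i. *)

Definition dist2 (p q : R * R) : R :=
  (fst p - fst q) ^ 2 + (snd p - snd q) ^ 2.

Definition disks_touch (p : R * R) (r : R) (q : R * R) (s : R) : Prop :=
  dist2 p q = (r + s) ^ 2.

Definition disks_apart (p : R * R) (r : R) (q : R * R) (s : R) : Prop :=
  dist2 p q > (r + s) ^ 2.

(* The leaf disks touch the central disk in counterclockwise cyclic order
   0, 1, ..., n-1: the directions from the central centre to the leaf
   centres have angles theta 0 < theta 1 < ... < theta (n-1) < theta 0 + 2 PI. *)
Definition respects_embedding (n : nat) (c0 : R * R) (c : nat -> R * R) : Prop :=
  exists (theta rho : nat -> R),
    (forall i, (i < n)%nat -> 0 < rho i /\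
        c i = (fst c0 + rho i * cos (theta i), snd c0 + rho i * sin (theta i))) /\
    (forall i, (S i < n)%nat -> theta i < theta (S i)) /\
    ((0 < n)%nat -> theta (pred n) < theta O + 2 * PI).

(* (c0,r0) is the central disk, (c i, r i) the disk of leaf i. *)
Definition is_weighted_star_rep (n : nat) (w0 : R) (w : nat -> R)
    (c0 : R * R) (r0 : R) (c : nat -> R * R) (r : nat -> R) : Prop :=
  (exists lambda : R, 0 < lambda /\ r0 = lambda * w0 /\
      forall i, (i < n)%nat -> r i = lambda * w i) /\
  (forall i, (i < n)%nat -> disks_touch c0 r0 (c i) (r i)) /\
  (forall i j, (i < n)%nat -> (j < n)%nat -> i <> j ->
      disks_apart (c i) (r i) (c j) (r j)) /\
  respects_embedding n c0 c.

Definition has_weighted_star_rep (n : nat) (w0 : R) (w : nat -> R) : Prop :=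
  exists c0 r0 c r, is_weighted_star_rep n w0 w c0 r0 c r.

(* Every instruction
   costs one time unit.  There is no floor / real-to-integer conversion. *)
Inductive instr : Type :=
  | RConst (d : nat) (z : Z)
  | RAdd (d a b : nat) | RSub (d a b : nat) | RMul (d a b : nat) | RDiv (d a b : nat)
  | RSqrt (d a : nat)
  | RSin (d a : nat) | RCos (d a : nat) | RTan (d a : nat)
  | RAsin (d a : nat) | RAcos (d a : nat) | RAtan (d a : nat)
  | RPi (d : nat)
  | RMov (d a : nat)
  | RLoad (d ia : nat)
  | RStore (ia a : nat)
  | IToR (d ia : nat)
  | IConst (d : nat) (z : Z)
  | IAdd (d a b : nat) | ISub (d a b : nat) | IMul (d a b : nat)
  | IMov (d a : nat)
  | ILoad (d ia : nat)
  | IStore (ia a : nat)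
  | JLtR (a b tgt : nat) | JEqR (a b tgt : nat)
  | JLtI (a b tgt : nat) | JEqI (a b tgt : nat)
  | Jmp (tgt : nat)
  | Halt.

Record config : Type := Config { pc : nat; rm : nat -> R; im : nat -> Z }.

Definition updR (m : nat -> R) (k : nat) (v : R) : nat -> R :=
  fun j => if Nat.eqb j k then v else m j.
Definition updZ (m : nat -> Z) (k : nat) (v : Z) : nat -> Z :=
  fun j => if Nat.eqb j k then v else m j.

Definition halted (prog : list instr) (s : config) : Prop :=
  nth (pc s) prog Halt = Halt.

Definition step (prog : list instr) (s : config) : config :=
  let p := pc s in let m := rm s in let z := im s in
  let nx := S p in
  let setR d v := Config nx (updR m d v) z in
  let setZ d v := Config nx m (updZ z d v) in
  match nth p prog Halt with
  | RConst d k => setR d (IZR k)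
  | RAdd d a b => setR d (m a + m b)
  | RSub d a b => setR d (m a - m b)
  | RMul d a b => setR d (m a * m b)
  | RDiv d a b => setR d (m a / m b)
  | RSqrt d a => setR d (sqrt (m a))
  | RSin d a => setR d (sin (m a))
  | RCos d a => setR d (cos (m a))
  | RTan d a => setR d (tan (m a))
  | RAsin d a => setR d (asin (m a))
  | RAcos d a => setR d (acos (m a))
  | RAtan d a => setR d (atan (m a))
  | RPi d => setR d PI
  | RMov d a => setR d (m a)
  | RLoad d ia => setR d (m (Z.to_nat (z ia)))
  | RStore ia a => setR (Z.to_nat (z ia)) (m a)
  | IToR d ia => setR d (IZR (z ia))
  | IConst d k => setZ d k
  | IAdd d a b => setZ d (z a + z b)%Z
  | ISub d a b => setZ d (z a - z b)%Z
  | IMul d a b => setZ d (z a * z b)%Z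
  | IMov d a => setZ d (z a)
  | ILoad d ia => setZ d (z (Z.to_nat (z ia)))
  | IStore ia a => setZ (Z.to_nat (z ia)) (z a)
  | JLtR a b t => Config (if Rlt_dec (m a) (m b) then t else nx) m z
  | JEqR a b t => Config (if Req_EM_T (m a) (m b) then t else nx) m z
  | JLtI a b t => Config (if Z.ltb (z a) (z b) then t else nx) m z
  | JEqI a b t => Config (if Z.eqb (z a) (z b) then t else nx) m z
  | Jmp t => Config t m z
  | Halt => s
  end.

Fixpoint run (prog : list instr) (t : nat) (s : config) : config :=
  match t with
  | O => s
  | S t' => run prog t' (step prog s)
  end.

(* Input encoding for a star with n leaves: im[0] = n, rm[0] = w0,
   rm[1+i] = w i for i < n; all other cells are 0; pc = 0. *)
Definition star_input (n : nat) (w0 : R) (w : nat -> R) : config :=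
  Config O
    (fun j => match j with O => w0 | S i => if Nat.ltb i n then w i else 0 end)
    (fun j => match j with O => Z.of_nat n | _ => 0%Z end).

(* Output encoding: im[0] = 1 means "a representation exists"; then the
   central disk is (rm[0], rm[1]) with radius rm[2], and leaf i's disk is
   (rm[3+3i], rm[4+3i]) with radius rm[5+3i]. *)
Definition out_yes (s : config) : Prop := im s 0 = 1%Z.
Definition out_c0 (s : config) : R * R := (rm s 0, rm s 1).
Definition out_r0 (s : config) : R := rm s 2.
Definition out_c (s : config) (i : nat) : R * R := (rm s (3 + 3 * i), rm s (4 + 3 * i)).
Definition out_r (s : config) (i : nat) : R := rm s (5 + 3 * i).

From Stdlib Require Import Reals ZArith List Lra Lia Psatz.
From Stdlib Require Import FunctionalExtensionality.
Import ListNotations.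
Open Scope R_scope.

(* Fix the scale so that the centre disk has radius w0 and put a_i = w_i / (w0 + w_i).
   Two leaf disks touching the centre disk are disjoint iff the angle between their
   centres, seen from the centre, exceeds sep_angle a_i a_j = 2 asin (sqrt (a_i a_j)).
   After rotating the cyclic order so that a largest leaf comes first, a representation
   exists iff the longest chain of required separations around the circle,
   T = max_l (q_l + sep_angle a_l a_0) with q_l = max_(i<l) (q_i + sep_angle a_i a_l),
   is less than 2 PI; the slack 2 PI - T is then spread evenly between the leaves.
   Since sep_angle is monotone in both arguments, q_l is attained at an index of a stack
   of leaves with decreasing a; leaves popped for l are dominated by l forever after,
   so every leaf is pushed and popped at most once and the program runs in linear time. *)

Lemma asin_lt a b : -1 <= a -> a < b -> b <= 1 -> asin a < asin b.
Proof.
  intros Ha Hab Hb. pose proof (asin_bound a); pose proof (asin_bound b).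
  destruct (Rlt_or_le (asin a) (asin b)) as [Hlt|Hge]; [exact Hlt|].
  destruct (Rle_lt_or_eq_dec _ _ Hge) as [Hlt|Heq].
  - assert (Hs : sin (asin b) < sin (asin a)) by (apply sin_increasing_1; lra).
    rewrite !sin_asin in Hs; lra.
  - apply (f_equal sin) in Heq. rewrite !sin_asin in Heq; lra.
Qed.

Lemma asin_le a b : -1 <= a -> a <= b -> b <= 1 -> asin a <= asin b.
Proof.
  intros Ha Hab Hb. destruct (Req_dec a b) as [->|Hne]; [lra|].
  left; apply asin_lt; lra.
Qed.

Lemma cos_2PI_sub x : cos (2 * PI - x) = cos x.
Proof. rewrite cos_minus, cos_2PI, sin_2PI. ring. Qed.
Lemma cos_sub_2PI x : cos (x - 2 * PI) = cos x.
Proof. rewrite cos_minus, cos_2PI, sin_2PI. ring. Qed.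
Lemma sin_sub_2PI x : sin (x - 2 * PI) = sin x.
Proof. rewrite sin_minus, cos_2PI, sin_2PI. ring. Qed.
Lemma cos_add_2PI x : cos (x + 2 * PI) = cos x.
Proof. rewrite cos_plus, cos_2PI, sin_2PI. ring. Qed.

Lemma cos_lt_of_sep p D : 0 < p < PI -> p < D < 2 * PI - p -> cos D < cos p.
Proof.
  intros Hp HD. destruct (Rle_or_lt D PI).
  - apply cos_decreasing_1; lra.
  - rewrite <- cos_2PI_sub. apply cos_decreasing_1; lra.
Qed.

Lemma sep_of_cos_lt p D : 0 < p < PI -> 0 < D < 2 * PI -> cos D < cos p ->
  p < D < 2 * PI - p.
Proof.
  intros Hp HD Hc. split.
  - destruct (Rle_or_lt D p) as [Hle|]; [exfalso|auto].
    destruct (Req_dec D p) as [->|Hne]; [lra|].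
    assert (cos p < cos D) by (apply cos_decreasing_1; lra). lra.
  - destruct (Rle_or_lt (2 * PI - p) D) as [Hle|]; [exfalso|auto].
    rewrite <- cos_2PI_sub in Hc.
    destruct (Req_dec (2 * PI - D) p) as [Heq|Hne]; [rewrite Heq in Hc; lra|].
    assert (cos p < cos (2 * PI - D)) by (apply cos_decreasing_1; lra). lra.
Qed.

Definition sep_angle (x y : R) : R := 2 * asin (sqrt (x * y)).

Lemma sep_angle_sym x y : sep_angle x y = sep_angle y x.
Proof. unfold sep_angle; now rewrite (Rmult_comm x y). Qed.

Lemma sqrt_mul_unit_interval x y : 0 <= x <= 1 -> 0 <= y <= 1 -> 0 <= sqrt (x * y) <= 1.
Proof.
  intros Hx Hy. split; [apply sqrt_pos|].
  rewrite <- sqrt_1. apply sqrt_le_1_alt. nra.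
Qed.

Lemma sep_angle_le_l x x' y : 0 <= x -> x <= x' -> x' <= 1 -> 0 <= y <= 1 ->
  sep_angle x y <= sep_angle x' y.
Proof.
  intros Hx Hxx' Hx' Hy. unfold sep_angle.
  pose proof (sqrt_mul_unit_interval x y ltac:(lra) Hy).
  pose proof (sqrt_mul_unit_interval x' y ltac:(lra) Hy).
  assert (sqrt (x * y) <= sqrt (x' * y)) by (apply sqrt_le_1_alt; nra).
  assert (asin (sqrt (x * y)) <= asin (sqrt (x' * y))) by (apply asin_le; lra). lra.
Qed.

Lemma sep_angle_le_r x y y' : 0 <= x <= 1 -> 0 <= y -> y <= y' -> y' <= 1 ->
  sep_angle x y <= sep_angle x y'.
Proof.
  intros. rewrite (sep_angle_sym x y), (sep_angle_sym x y'). apply sep_angle_le_l; lra.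
Qed.

Lemma sep_angle_ge0 x y : 0 <= x <= 1 -> 0 <= y <= 1 -> 0 <= sep_angle x y.
Proof.
  intros Hx Hy.
  replace 0 with (sep_angle 0 y) by (unfold sep_angle; rewrite Rmult_0_l, sqrt_0, asin_0; ring).
  apply sep_angle_le_l; lra.
Qed.

Lemma cos_sep_angle x y : 0 <= x <= 1 -> 0 <= y <= 1 -> cos (sep_angle x y) = 1 - 2 * x * y.
Proof.
  intros Hx Hy. unfold sep_angle. rewrite cos_2a_sin.
  pose proof (sqrt_mul_unit_interval x y Hx Hy).
  rewrite sin_asin by lra. rewrite Rmult_assoc, sqrt_sqrt by nra. ring.
Qed.

Lemma sep_angle_bounds x y : 0 < x < 1 -> 0 < y < 1 -> 0 < sep_angle x y < PI.
Proof.
  intros Hx Hy. unfold sep_angle.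
  assert (Hs0 : 0 < sqrt (x * y)) by (apply sqrt_lt_R0; nra).
  assert (Hs1 : sqrt (x * y) < 1) by (rewrite <- sqrt_1; apply sqrt_lt_1_alt; nra).
  pose proof (asin_lt 0 _ ltac:(lra) Hs0 ltac:(lra)) as Hpos. rewrite asin_0 in Hpos.
  pose proof (asin_bound_lt (sqrt (x * y)) ltac:(lra)). lra.
Qed.

Lemma sep_angle_twice_asin x y : asin (sqrt (x * y)) + asin (sqrt (x * y)) = sep_angle x y.
Proof. unfold sep_angle; ring. Qed.

Definition open_unit_on (a : nat -> R) (n : nat) := forall k, (k < n)%nat -> 0 < a k < 1.

Definition separated (a P : nat -> R) (n : nat) :=
  forall k l, (k < l)%nat -> (l < n)%nat ->
    sep_angle (a k) (a l) < P l - P k < 2 * PI - sep_angle (a k) (a l).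

Lemma separated_cos_lt a P n : open_unit_on a n -> separated a P n ->
  forall k l, (k < n)%nat -> (l < n)%nat -> k <> l -> cos (P k - P l) < 1 - 2 * a k * a l.
Proof.
  intros Ha HP k l Hk Hl Hne.
  pose proof (Ha k Hk) as Hak. pose proof (Ha l Hl) as Hal.
  destruct (Nat.lt_gt_cases k l) as [[Hlt|Hlt] _]; [exact Hne| |].
  - specialize (HP k l Hlt Hl). pose proof (sep_angle_bounds _ _ Hak Hal).
    rewrite <- cos_neg. replace (- (P k - P l)) with (P l - P k) by ring.
    rewrite <- cos_sep_angle by lra. apply cos_lt_of_sep; lra.
  - specialize (HP l k Hlt Hk). pose proof (sep_angle_bounds _ _ Hal Hak).
    replace (2 * a k * a l) with (2 * a l * a k) by ring.
    rewrite <- cos_sep_angle by lra. apply cos_lt_of_sep; lra.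
Qed.

Definition chain_sound (a q : nat -> R) (j : nat) :=
  forall i l, (i < l)%nat -> (l < j)%nat -> q i + sep_angle (a i) (a l) <= q l.

Definition chain_attained (a q : nat -> R) (j : nat) := q 0%nat = 0 /\
  forall l, (0 < l)%nat -> (l < j)%nat ->
    exists i, (i < l)%nat /\ q l = q i + sep_angle (a i) (a l).

Definition cycle_length (a q : nat -> R) (j : nat) (T : R) :=
  (forall l, (1 <= l)%nat -> (l < j)%nat -> q l + sep_angle (a l) (a 0%nat) <= T) /\
  (T = 0 \/ exists l, (1 <= l)%nat /\ (l < j)%nat /\ T = q l + sep_angle (a l) (a 0%nat)).

Definition spread (q : nat -> R) (d : R) (k : nat) : R := q k + d * INR k.

Lemma chain_sound_ge0 a q j : open_unit_on a j -> chain_sound a q j -> q 0%nat = 0 ->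
  forall l, (l < j)%nat -> 0 <= q l.
Proof.
  intros Ha Hs Hq0 [|l] Hl; [lra|].
  specialize (Hs 0%nat (S l) ltac:(lia) Hl).
  pose proof (Ha 0%nat ltac:(lia)); pose proof (Ha (S l) Hl).
  pose proof (sep_angle_ge0 (a 0%nat) (a (S l)) ltac:(lra) ltac:(lra)). lra.
Qed.

Section ChainCycle.
Variables (a q : nat -> R) (n : nat) (T : R).
Hypothesis Ha : open_unit_on a n.

(* Using a largest leaf as leaf 0 bounds the wrap-around gaps: sep_angle a_k a_l is at most
   sep_angle a_l a_0. *)
Lemma spread_separated : (forall k, (k < n)%nat -> a k <= a 0%nat) ->
  chain_sound a q n -> q 0%nat = 0 -> cycle_length a q n T -> T < 2 * PI -> (0 < n)%nat ->
  let p := spread q ((2 * PI - T) / INR n) in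
  separated a p n /\ (forall k, (k < n)%nat -> 0 <= p k < 2 * PI).
Proof.
  intros Hmax Hs Hq0 [HT1 HT2] HT Hn p.
  set (d := (2 * PI - T) / INR n) in p.
  assert (Hnr : 0 < INR n) by (apply lt_0_INR; lia).
  assert (Hd : 0 < d) by (unfold d; apply Rdiv_lt_0_compat; lra).
  assert (Hdn : d * INR n = 2 * PI - T) by (unfold d; field; lra).
  assert (Hq := chain_sound_ge0 a q n Ha Hs Hq0).
  assert (Hidx : forall k, (k < n)%nat -> 0 <= INR k <= INR n - 1).
  { intros k Hk. split; [apply pos_INR|].
    assert (INR (S k) <= INR n) by (apply le_INR; lia). rewrite S_INR in *. lra. }
  assert (Hp : forall k, (k < n)%nat -> 0 <= p k < 2 * PI).
  { intros k Hk. unfold p, spread. pose proof (Hq k Hk). pose proof (Hidx k Hk).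
    split; [nra|]. destruct k as [|k].
    - simpl. pose proof PI_RGT_0. lra.
    - specialize (HT1 (S k) ltac:(lia) Hk).
      pose proof (Ha 0%nat ltac:(lia)). pose proof (Ha (S k) Hk).
      pose proof (sep_angle_ge0 (a (S k)) (a 0%nat) ltac:(lra) ltac:(lra)). nra. }
  split; [|exact Hp].
  intros k l Hkl Hl.
  pose proof (Ha k ltac:(lia)). pose proof (Ha l Hl). pose proof (Ha 0%nat ltac:(lia)).
  assert (Hlk : INR k < INR l) by (apply lt_INR; lia).
  split.
  - unfold p, spread. specialize (Hs k l Hkl Hl). nra.
  - pose proof (Hp k ltac:(lia)). pose proof (Hidx l Hl).
    assert (sep_angle (a k) (a l) <= sep_angle (a l) (a 0%nat)).
    { rewrite sep_angle_sym. apply sep_angle_le_r; try lra. apply Hmax; lia. }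
    specialize (HT1 l ltac:(lia) Hl).
    unfold p, spread in *. nra.
Qed.

Lemma cycle_length_lt_2PI : chain_attained a q n -> cycle_length a q n T ->
  forall P : nat -> R, P 0%nat = 0 -> separated a P n -> T < 2 * PI.
Proof.
  intros [Hq0 Hatt] [HT1 HT2] P HP0 HP.
  assert (Hle : forall l, (l < n)%nat -> q l <= P l).
  { intro l. induction l as [l IH] using lt_wf_ind. intros Hl.
    destruct l as [|l]; [lra|].
    destruct (Hatt (S l) ltac:(lia) Hl) as [i [Hi Heq]].
    specialize (IH i Hi ltac:(lia)). specialize (HP i (S l) Hi Hl). lra. }
  destruct HT2 as [->|[l [H1 [H2 ->]]]].
  - pose proof PI_RGT_0. lra.
  - specialize (HP 0%nat l ltac:(lia) H2). specialize (Hle l H2).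
    rewrite sep_angle_sym. lra.
Qed.

End ChainCycle.

Lemma sin_cos_sq x : sin x ^ 2 + cos x ^ 2 = 1.
Proof. pose proof (sin2_cos2 x) as H. unfold Rsqr in H. lra. Qed.

Lemma dist2_polar x0 y0 A B s t :
  dist2 (x0 + A * cos s, y0 + A * sin s) (x0 + B * cos t, y0 + B * sin t)
  = A ^ 2 + B ^ 2 - 2 * A * B * cos (s - t).
Proof.
  unfold dist2; cbn [fst snd]. rewrite cos_minus.
  pose proof (sin_cos_sq s) as Hs. pose proof (sin_cos_sq t) as Ht.
  transitivity (A ^ 2 * (sin s ^ 2 + cos s ^ 2) + B ^ 2 * (sin t ^ 2 + cos t ^ 2)
                - 2 * A * B * (cos s * cos t + sin s * sin t)); [ring|].
  rewrite Hs, Ht. ring.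
Qed.

Lemma dist2_center_polar x0 y0 A s :
  dist2 (x0, y0) (x0 + A * cos s, y0 + A * sin s) = A ^ 2.
Proof.
  replace (x0, y0) with (x0 + 0 * cos 0, y0 + 0 * sin 0) by (f_equal; ring).
  rewrite dist2_polar. ring.
Qed.

Lemma Rlt_div_r_iff a b c : 0 < c -> a < b / c <-> a * c < b.
Proof.
  intros Hc. unfold Rdiv. split; intro H.
  - apply Rmult_lt_compat_r with (r := c) in H; [|lra].
    rewrite Rmult_assoc, Rinv_l, Rmult_1_r in H by lra. exact H.
  - apply Rmult_lt_reg_r with c; [lra|]. rewrite Rmult_assoc, Rinv_l, Rmult_1_r by lra. exact H.
Qed.

Lemma disks_apart_polar_iff x0 y0 r0 ri rj s t : 0 < r0 -> 0 < ri -> 0 < rj ->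
  disks_apart (x0 + (r0 + ri) * cos s, y0 + (r0 + ri) * sin s) ri
              (x0 + (r0 + rj) * cos t, y0 + (r0 + rj) * sin t) rj <->
  cos (s - t) < 1 - 2 * (ri / (r0 + ri)) * (rj / (r0 + rj)).
Proof.
  intros H0 Hi Hj. unfold disks_apart. rewrite dist2_polar.
  assert (Hpos : 0 < (r0 + ri) * (r0 + rj)) by nra.
  replace (1 - 2 * (ri / (r0 + ri)) * (rj / (r0 + rj)))
    with (((r0 + ri) * (r0 + rj) - 2 * ri * rj) / ((r0 + ri) * (r0 + rj))) by (field; lra).
  rewrite Rlt_div_r_iff by lra. nra.
Qed.

Definition rot (n m k : nat) : nat := if Nat.ltb (m + k) n then (m + k)%nat else (m + k - n)%nat.
Definition unrot (n m j : nat) : nat := if Nat.leb m j then (j - m)%nat else (j + n - m)%nat.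

Lemma rot_lt n m k : (m < n)%nat -> (k < n)%nat -> (rot n m k < n)%nat.
Proof. unfold rot; intros; destruct (Nat.ltb_spec (m + k) n); lia. Qed.
Lemma unrot_lt n m j : (m < n)%nat -> (j < n)%nat -> (unrot n m j < n)%nat.
Proof. unfold unrot; intros; destruct (Nat.leb_spec m j); lia. Qed.
Lemma rot_unrot n m j : (m < n)%nat -> (j < n)%nat -> rot n m (unrot n m j) = j.
Proof.
  unfold unrot, rot; intros; destruct (Nat.leb_spec m j);
    [destruct (Nat.ltb_spec (m + (j - m)) n)|destruct (Nat.ltb_spec (m + (j + n - m)) n)]; lia.
Qed.
Lemma unrot_rot n m k : (m < n)%nat -> (k < n)%nat -> unrot n m (rot n m k) = k.
Proof.
  unfold unrot, rot; intros; destruct (Nat.ltb_spec (m + k) n);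
    [destruct (Nat.leb_spec m (m + k))|destruct (Nat.leb_spec m (m + k - n))]; lia.
Qed.
Lemma rot_inj n m k k' : (m < n)%nat -> (k < n)%nat -> (k' < n)%nat -> k <> k' ->
  rot n m k <> rot n m k'.
Proof. intros Hm Hk Hk' Hne E. apply (f_equal (unrot n m)) in E. rewrite !unrot_rot in E; auto. Qed.

Definition wratio (w0 : R) (w : nat -> R) i := w i / (w0 + w i).

Lemma wratio_bounds w0 w i : 0 < w0 -> 0 < w i -> 0 < wratio w0 w i < 1.
Proof.
  intros. unfold wratio. split; [apply Rdiv_lt_0_compat; lra|].
  apply Rmult_lt_reg_r with (w0 + w i); [lra|].
  unfold Rdiv. rewrite Rmult_assoc, Rinv_l by lra. lra.
Qed.

Lemma wratio_le w0 w i j : 0 < w0 -> 0 < w i -> 0 < w j -> w i <= w j ->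
  wratio w0 w i <= wratio w0 w j.
Proof.
  intros H0 Hi Hj Hij. unfold wratio.
  apply Rmult_le_reg_r with ((w0 + w i) * (w0 + w j)); [nra|].
  replace (w i / (w0 + w i) * ((w0 + w i) * (w0 + w j))) with (w i * (w0 + w j)) by (field; lra).
  replace (w j / (w0 + w j) * ((w0 + w i) * (w0 + w j))) with (w j * (w0 + w i)) by (field; lra).
  nra.
Qed.

Lemma star_rep_angles n w0 w c0 r0 c r : 0 < w0 -> (forall i, (i < n)%nat -> 0 < w i) ->
  is_weighted_star_rep n w0 w c0 r0 c r ->
  exists theta : nat -> R,
    (forall i j, (i < j)%nat -> (j < n)%nat -> theta i < theta j < theta i + 2 * PI) /\
    (forall i j, (i < n)%nat -> (j < n)%nat -> i <> j ->
       cos (theta i - theta j) < 1 - 2 * wratio w0 w i * wratio w0 w j).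
Proof.
  intros Hw0 Hw [[lam [Hl [Hr0 Hr]]] [Ht [Hap [theta [rho [Hc [Hinc Hlast]]]]]]].
  assert (Hrpos : forall i, (i < n)%nat -> 0 < r i).
  { intros i Hi. rewrite Hr by auto. pose proof (Hw i Hi). nra. }
  assert (Hr0p : 0 < r0) by (rewrite Hr0; nra).
  assert (Hrho : forall i, (i < n)%nat -> rho i = r0 + r i).
  { intros i Hi. destruct (Hc i Hi) as [Hp Hci]. specialize (Ht i Hi).
    unfold disks_touch in Ht. destruct c0 as [x0 y0].
    rewrite Hci, dist2_center_polar in Ht. pose proof (Hrpos i Hi). nra. }
  assert (Hmono : forall i j, (i < j)%nat -> (j < n)%nat -> theta i < theta j).
  { intros i j Hij. induction j as [|j IHj]; [lia|]. intros Hj.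
    destruct (Nat.eq_dec i j); [subst; apply Hinc; auto|].
    specialize (IHj ltac:(lia) ltac:(lia)). specialize (Hinc j Hj). lra. }
  exists theta. split.
  - intros i j Hij Hj. split; [apply Hmono; auto|]. specialize (Hlast ltac:(lia)).
    assert (theta j <= theta (pred n)).
    { destruct (Nat.eq_dec j (pred n)); [subst; lra|]. left; apply Hmono; lia. }
    assert (theta 0%nat <= theta i).
    { destruct i; [lra|]. left; apply Hmono; lia. }
    lra.
  - intros i j Hi Hj Hij. specialize (Hap i j Hi Hj Hij).
    destruct (Hc i Hi) as [_ Hci]. destruct (Hc j Hj) as [_ Hcj].
    rewrite Hci, Hcj, (Hrho i Hi), (Hrho j Hj) in Hap.
    apply disks_apart_polar_iff in Hap; auto.
    assert (Hratio : forall k, (k < n)%nat -> r k / (r0 + r k) = wratio w0 w k).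
    { intros k Hk. unfold wratio. rewrite Hr0, Hr by auto. pose proof (Hw k Hk). field. split; nra. }
    rewrite !Hratio in Hap by auto. exact Hap.
Qed.

Section Representations.
Variables (n m : nat) (w0 : R) (w : nat -> R).
Hypothesis Hw0 : 0 < w0.
Hypothesis Hw : forall i, (i < n)%nat -> 0 < w i.
Hypothesis Hm : (m < n)%nat.

Let a k := wratio w0 w (rot n m k).

Lemma wratio_rot_bounds : open_unit_on a n.
Proof. intros k Hk. apply wratio_bounds; auto. apply Hw, rot_lt; auto. Qed.

Definition leaf_center (p : nat -> R) (j : nat) : R * R :=
  ((w0 + w j) * cos (p (unrot n m j)), (w0 + w j) * sin (p (unrot n m j))).

Lemma star_rep_of_separated (p : nat -> R) :
  separated a p n -> (forall k, (k < n)%nat -> 0 <= p k < 2 * PI) ->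
  is_weighted_star_rep n w0 w (0, 0) w0 (leaf_center p) w.
Proof.
  intros Hp Hp2.
  assert (Hinc : forall k l, (k < l)%nat -> (l < n)%nat -> p k < p l).
  { intros k l H1 H2. pose proof (Hp k l H1 H2).
    pose proof (sep_angle_bounds _ _ (wratio_rot_bounds k ltac:(lia)) (wratio_rot_bounds l H2)). lra. }
  (* leaves before m in the input order lie one full turn back *)
  set (theta := fun j => p (unrot n m j) - (if Nat.ltb j m then 2 * PI else 0)).
  assert (Hc : forall j, leaf_center p j =
                 (0 + (w0 + w j) * cos (theta j), 0 + (w0 + w j) * sin (theta j))).
  { intro j. unfold leaf_center, theta. destruct (Nat.ltb j m).
    - rewrite cos_sub_2PI, sin_sub_2PI. f_equal; ring.
    - rewrite Rminus_0_r. f_equal; ring. }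
  split; [|split; [|split]].
  - exists 1. split; [lra|]. split; [ring|]. intros; ring.
  - intros i Hi. unfold disks_touch. rewrite Hc, dist2_center_polar. reflexivity.
  - intros i j Hi Hj Hij. rewrite !Hc. apply disks_apart_polar_iff; auto.
    assert (Hci : cos (theta i - theta j) = cos (p (unrot n m i) - p (unrot n m j))).
    { unfold theta. destruct (Nat.ltb i m), (Nat.ltb j m).
      - f_equal; ring.
      - rewrite <- (cos_sub_2PI (p (unrot n m i) - _)). f_equal; ring.
      - rewrite <- (cos_add_2PI (p (unrot n m i) - _)). f_equal; ring.
      - f_equal; ring. }
    rewrite Hci.
    change (w i / (w0 + w i)) with (wratio w0 w i). change (w j / (w0 + w j)) with (wratio w0 w j).
    assert (Hai : wratio w0 w i = a (unrot n m i)) by (unfold a; rewrite rot_unrot; auto).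
    assert (Haj : wratio w0 w j = a (unrot n m j)) by (unfold a; rewrite rot_unrot; auto).
    rewrite Hai, Haj.
    apply (separated_cos_lt a p n wratio_rot_bounds Hp); try apply unrot_lt; auto.
    intro E. apply Hij. rewrite <- (rot_unrot n m i), <- (rot_unrot n m j), E; auto.
  - exists theta, (fun j => w0 + w j). split; [|split].
    + intros i Hi. split; [pose proof (Hw i Hi); lra|]. rewrite Hc. reflexivity.
    + intros i Hi. unfold theta, unrot.
      destruct (Nat.ltb_spec i m), (Nat.ltb_spec (S i) m), (Nat.leb_spec m i), (Nat.leb_spec m (S i));
        try lia.
      * assert (p (i + n - m)%nat < p (S i + n - m)%nat) by (apply Hinc; lia). lra.
      * replace (S i - m)%nat with 0%nat by lia.
        pose proof (Hp2 (i + n - m)%nat ltac:(lia)). pose proof (Hp2 0%nat ltac:(lia)). lra.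
      * assert (p (i - m)%nat < p (S i - m)%nat) by (apply Hinc; lia). lra.
    + intros Hn. unfold theta, unrot.
      destruct (Nat.ltb_spec (pred n) m), (Nat.ltb_spec 0 m), (Nat.leb_spec m (pred n)), (Nat.leb_spec m 0);
        try lia.
      * assert (p (pred n - m)%nat < p (0 + n - m)%nat) by (apply Hinc; lia). lra.
      * replace m with 0%nat in * by lia.
        pose proof (Hp2 (pred n - 0)%nat ltac:(lia)). pose proof (Hp2 (0 - 0)%nat ltac:(lia)). lra.
Qed.

Lemma separated_of_star_rep c0 r0 c r : is_weighted_star_rep n w0 w c0 r0 c r ->
  exists P : nat -> R, P 0%nat = 0 /\ separated a P n.
Proof.
  intros Hrep.
  destruct (star_rep_angles n w0 w c0 r0 c r Hw0 Hw Hrep) as (theta & Hord & Hcos).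
  assert (Hmono : forall i j, (i < j)%nat -> (j < n)%nat -> theta i < theta j)
    by (intros i j Hij Hj; apply Hord; auto).
  assert (Hwrap : forall i j, (i < j)%nat -> (j < n)%nat -> theta j < theta i + 2 * PI)
    by (intros i j Hij Hj; apply Hord; auto).
  exists (fun k => theta (rot n m k) - theta m + (if Nat.ltb (m + k) n then 0 else 2 * PI)).
  split.
  - unfold rot. rewrite Nat.add_0_r. destruct (Nat.ltb_spec m n); [ring|lia].
  - intros k l Hkl Hln.
    pose proof (wratio_rot_bounds k ltac:(lia)) as Hak.
    pose proof (wratio_rot_bounds l Hln) as Hal.
    pose proof (sep_angle_bounds _ _ Hak Hal) as Hps.
    pose proof (rot_inj n m k l Hm ltac:(lia) Hln ltac:(lia)) as Hneq.
    pose proof (rot_lt n m k Hm ltac:(lia)). pose proof (rot_lt n m l Hm Hln).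
    assert (Hc2 : cos (theta (rot n m l) - theta (rot n m k)) < cos (sep_angle (a k) (a l))).
    { rewrite cos_sep_angle by lra. unfold a.
      replace (2 * wratio w0 w (rot n m k) * wratio w0 w (rot n m l))
        with (2 * wratio w0 w (rot n m l) * wratio w0 w (rot n m k)) by ring.
      apply Hcos; auto. }
    apply sep_of_cos_lt; auto; unfold rot in *;
      destruct (Nat.ltb_spec (m + k) n), (Nat.ltb_spec (m + l) n); try lia.
    + pose proof (Hmono (m + k)%nat (m + l)%nat ltac:(lia) ltac:(lia)).
      pose proof (Hwrap (m + k)%nat (m + l)%nat ltac:(lia) ltac:(lia)). lra.
    + pose proof (Hmono (m + l - n)%nat (m + k)%nat ltac:(lia) ltac:(lia)).
      pose proof (Hwrap (m + l - n)%nat (m + k)%nat ltac:(lia) ltac:(lia)). lra.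
    + pose proof (Hmono (m + k - n)%nat (m + l - n)%nat ltac:(lia) ltac:(lia)).
      pose proof (Hwrap (m + k - n)%nat (m + l - n)%nat ltac:(lia) ltac:(lia)). lra.
    + replace (_ - _) with (theta (m + l)%nat - theta (m + k)%nat) by ring. exact Hc2.
    + replace (_ - _) with (theta (m + l - n)%nat - theta (m + k)%nat + 2 * PI) by ring.
      rewrite cos_add_2PI. exact Hc2.
    + replace (_ - _) with (theta (m + l - n)%nat - theta (m + k - n)%nat) by ring. exact Hc2.
Qed.

End Representations.

(* After leaves 0 .. j-1 have been processed, st 0 < ... < st t is the stack (bottom to
   top).  Every processed leaf is dominated by a stack entry with a later index and a
   larger ratio; by monotonicity of sep_angle it is then useless as predecessor. *)
Definition ChainInv (a q : nat -> R) (j t : nat) (st : nat -> nat) (T : R) :=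
  (t < j)%nat /\ st 0%nat = 0%nat /\ (forall p, (p < t)%nat -> (st p < st (S p))%nat) /\
  (st t < j)%nat /\ chain_sound a q j /\ chain_attained a q j /\
  (forall i, (i < j)%nat -> exists p, (p <= t)%nat /\ (i <= st p)%nat /\ a i <= a (st p)) /\
  cycle_length a q j T.

Lemma ChainInv_init a q st : q 0%nat = 0 -> st 0%nat = 0%nat -> ChainInv a q 1 0 st 0.
Proof.
  intros Hq Hs. unfold ChainInv, chain_sound, chain_attained, cycle_length.
  split; [lia|]. split; [auto|]. split; [intros; lia|]. split; [rewrite Hs; lia|].
  split; [intros; lia|]. split; [split; [auto|intros; lia]|]. split.
  - intros i Hi. exists 0%nat. replace i with 0%nat by lia. rewrite Hs. split; [lia|split; [lia|lra]].
  - split; [intros; lia|]. left; reflexivity.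
Qed.

Lemma stack_increasing st t : (forall p, (p < t)%nat -> (st p < st (S p))%nat) ->
  forall p p', (p < p')%nat -> (p' <= t)%nat -> (st p < st p')%nat.
Proof.
  intros H p p' Hp. induction p' as [|p' IH]; [lia|]. intros Hp'.
  destruct (Nat.eq_dec p p'); [subst; apply H; lia|].
  specialize (IH ltac:(lia) ltac:(lia)). specialize (H p' ltac:(lia)). lia.
Qed.

Lemma stack_lt a q j t st T : ChainInv a q j t st T -> forall p, (p <= t)%nat -> (st p < j)%nat.
Proof.
  intros (_ & _ & Hinc & Hstj & _) p Hp. destruct (Nat.eq_dec p t); [subst; auto|].
  pose proof (stack_increasing st t Hinc p t ltac:(lia) ltac:(lia)). lia.
Qed.

Section Push.
Variables (a q : nat -> R) (n j t0 t : nat) (st : nat -> nat) (T cand : R).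
Hypothesis Ha : open_unit_on a n.
Hypothesis Hjn : (j < n)%nat.
Hypothesis Hinv : ChainInv a q j t0 st T.
Hypothesis Htt : (t <= t0)%nat.
(* leaf j has popped the entries above position t and stops at the entry st t *)
Hypothesis Hpop : forall p, (t < p <= t0)%nat ->
  q (st p) + sep_angle (a (st p)) (a j) <= cand /\ a (st p) < a j.
Hypothesis Htop : q (st t) + sep_angle (a (st t)) (a j) <= cand.
Hypothesis Hstop : a j <= a (st t).
Hypothesis Hcand : cand = 0 \/ exists i, (i < j)%nat /\ cand = q i + sep_angle (a i) (a j).

Definition q_push := fun l => if Nat.eqb l j then cand else q l.
Definition st_push := fun p => if Nat.eqb p (S t) then j else st p.
Definition T_push :=
  if Rlt_dec T (cand + sep_angle (a j) (a 0%nat)) then cand + sep_angle (a j) (a 0%nat) else T.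

Lemma pop_bound : forall i, (i < j)%nat -> q i + sep_angle (a i) (a j) <= cand.
Proof.
  pose proof (stack_lt _ _ _ _ _ _ Hinv) as Hstp.
  destruct Hinv as (Ht0 & Hs0 & Hinc & Hstj & Hs & Hat & Hdom & _).
  assert (Haj : open_unit_on a j) by (intros k Hk; apply Ha; lia).
  intros i Hi. destruct (Hdom i Hi) as (p & Hp & Hip & Hap).
  set (s := st p) in *.
  assert (Hs_lt : (s < j)%nat) by (apply Hstp; auto).
  pose proof (Ha i ltac:(lia)). pose proof (Ha s ltac:(lia)). pose proof (Ha j Hjn).
  assert (Hqi : q i <= q s).
  { destruct (Nat.eq_dec i s) as [->|]; [lra|].
    specialize (Hs i s ltac:(lia) Hs_lt).
    pose proof (sep_angle_ge0 (a i) (a s) ltac:(lra) ltac:(lra)). lra. }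
  assert (Hvia : q i + sep_angle (a i) (a j) <= q s + sep_angle (a s) (a j)).
  { pose proof (sep_angle_le_l (a i) (a s) (a j) ltac:(lra) Hap ltac:(lra) ltac:(lra)). lra. }
  destruct (Nat.lt_ge_cases t p).
  - destruct (Hpop p ltac:(lia)). unfold s in *. lra.
  - destruct (Nat.eq_dec p t) as [->|]; [unfold s in Hvia; lra|].
    pose proof (stack_increasing st t0 Hinc p t ltac:(lia) ltac:(lia)) as Hlt. fold s in Hlt.
    pose proof (Hstp t ltac:(lia)). pose proof (Ha (st t) ltac:(lia)).
    pose proof (Hs s (st t) Hlt ltac:(lia)).
    pose proof (sep_angle_le_r (a s) (a j) (a (st t)) ltac:(lra) ltac:(lra) Hstop ltac:(lra)).
    pose proof (sep_angle_ge0 (a (st t)) (a j) ltac:(lra) ltac:(lra)).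
    lra.
Qed.

Lemma ChainInv_push : ChainInv a q_push (S j) (S t) st_push T_push.
Proof.
  pose proof pop_bound as Hdm. pose proof (stack_lt _ _ _ _ _ _ Hinv) as Hstp.
  destruct Hinv as (Ht0 & Hs0 & Hinc & Hstj & Hs & [Hq0 Hat] & Hdom & HT1 & HT2).
  assert (Hcpos : 0 < cand).
  { pose proof (Hstp t Htt).
    pose proof (chain_sound_ge0 a q j ltac:(intros k Hk; apply Ha; lia) Hs Hq0 (st t) ltac:(lia)).
    pose proof (sep_angle_bounds _ _ (Ha (st t) ltac:(lia)) (Ha j Hjn)). lra. }
  unfold ChainInv, cycle_length, q_push, st_push, T_push.
  split; [lia|]. split; [destruct (Nat.eqb_spec 0 (S t)); [lia|auto]|].
  split.
  { intros p Hp. destruct (Nat.eqb_spec p (S t)); [lia|]. destruct (Nat.eqb_spec (S p) (S t)).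
    - assert (p = t) by lia. subst. apply Hstp; lia.
    - apply Hinc; lia. }
  split; [rewrite Nat.eqb_refl; lia|].
  split.
  { intros i l Hil Hl. destruct (Nat.eqb_spec i j); [lia|]. destruct (Nat.eqb_spec l j).
    - subst l. apply Hdm; lia.
    - apply Hs; lia. }
  split.
  { split; [destruct (Nat.eqb_spec 0 j); [lia|auto]|].
    intros l Hl0 Hl. destruct (Nat.eqb_spec l j).
    - subst l. destruct Hcand as [Hc|(i & Hi & Hc)]; [lra|]. exists i. split; auto.
      destruct (Nat.eqb_spec i j); [lia|auto].
    - destruct (Hat l Hl0 ltac:(lia)) as (i & Hi & Hc). exists i. split; auto.
      destruct (Nat.eqb_spec i j); [lia|auto]. }
  split.
  { intros i Hi. destruct (Nat.eq_dec i j).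
    - subst i. exists (S t). rewrite Nat.eqb_refl. split; [lia|split; [lia|lra]].
    - destruct (Hdom i ltac:(lia)) as (p & Hp & Hip & Hap).
      destruct (Nat.lt_ge_cases t p).
      + destruct (Hpop p ltac:(lia)). exists (S t). rewrite Nat.eqb_refl.
        pose proof (Hstp p Hp). split; [lia|split; [lia|lra]].
      + exists p. destruct (Nat.eqb_spec p (S t)); [lia|]. split; [lia|auto]. }
  destruct (Rlt_dec T (cand + sep_angle (a j) (a 0%nat))) as [HTl|HTg]; split.
  - intros l H1 H2. destruct (Nat.eqb_spec l j); [subst; lra|].
    specialize (HT1 l H1 ltac:(lia)). lra.
  - right. exists j. rewrite Nat.eqb_refl. split; [lia|split; [lia|auto]].
  - intros l H1 H2. destruct (Nat.eqb_spec l j); [subst; lra|].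
    specialize (HT1 l H1 ltac:(lia)). lra.
  - destruct HT2 as [->|(l & H1 & H2 & H3)]; [left; auto|right].
    exists l. destruct (Nat.eqb_spec l j); [lia|]. split; [lia|split; [lia|auto]].
Qed.

End Push.
(* Memory layout, with b = base n: the leaf weights are copied to rm[b + i] and w0 to
   rm[1]; the ratios of the rotated leaves go to rm[b + n + k], the chain values q_k to
   rm[b + 2n + k] and the output triples of the leaves to rm[b + 3n + 3i ..], which are
   finally copied down to rm[3 + 3i ..]; the stack lives in im[20 ..].  Main program
   points: 12 copying, 25 arg max, 37 rotation, 60 loop over leaves, 64 popping,
   97 decision, 109 placement, 139 copying out. *)
Definition prog : list instr := [
 (*0*) IConst 12 1%Z; IConst 13 0%Z; IConst 2 3%Z; IMul 1 0 2; IConst 2 20%Z;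
 (*5*) IAdd 1 1 2; JEqI 0 13 151; ISub 4 1 12; RStore 4 0; IConst 3 0%Z;
 (*10*) IMov 4 12; IMov 5 1; JEqI 3 0 19; RLoad 0 4; RStore 5 0;
 (*15*) IAdd 3 3 12; IAdd 4 4 12; IAdd 5 5 12; Jmp 12; ISub 4 1 12;
 (*20*) RLoad 1 4; IConst 6 0%Z; RLoad 2 1; IMov 3 12; IAdd 4 1 12;
 (*25*) JEqI 3 0 34; RLoad 3 4; JLtR 2 3 29; Jmp 31; RMov 2 3;
 (*30*) IMov 6 3; IAdd 3 3 12; IAdd 4 4 12; Jmp 25; IAdd 5 1 0;
 (*35*) IConst 3 0%Z; IMov 11 6; JEqI 3 0 50; JEqI 11 0 48; IAdd 4 1 11;
 (*40*) RLoad 3 4; RAdd 4 1 3; RDiv 3 3 4; RStore 5 3; IAdd 3 3 12;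
 (*45*) IAdd 5 5 12; IAdd 11 11 12; Jmp 37; IConst 11 0%Z; Jmp 39;
 (*50*) IAdd 14 1 0; IAdd 15 14 0; RConst 5 0%Z; RConst 8 0%Z; RStore 15 8;
 (*55*) IConst 16 20%Z; IStore 16 13; IConst 7 0%Z; RLoad 6 14; IMov 8 12;
 (*60*) JEqI 8 0 97; IAdd 4 14 8; RLoad 7 4; RConst 8 0%Z; IAdd 9 16 7;
 (*65*) ILoad 10 9; IAdd 4 14 10; RLoad 9 4; IAdd 5 15 10; RLoad 11 5;
 (*70*) RMul 10 9 7; RSqrt 10 10; RAsin 10 10; RAdd 10 10 10; RAdd 10 11 10;
 (*75*) JLtR 8 10 77; Jmp 78; RMov 8 10; JLtR 9 7 80; Jmp 82;
 (*80*) ISub 7 7 12; Jmp 64; IAdd 5 15 8; RStore 5 8; RMul 10 7 6;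
 (*85*) RSqrt 10 10; RAsin 10 10; RAdd 10 10 10; RAdd 10 8 10; JLtR 5 10 91;
 (*90*) Jmp 92; RMov 5 10; IAdd 7 7 12; IAdd 9 16 7; IStore 9 8;
 (*95*) IAdd 8 8 12; Jmp 60; RPi 12; RAdd 12 12 12; JLtR 5 12 102;
 (*100*) IConst 0 0%Z; Halt; RSub 13 12 5; IToR 14 0; RDiv 13 13 14;
 (*105*) IAdd 17 15 0; IConst 3 0%Z; IMov 11 6; IConst 18 3%Z; JEqI 3 0 135;
 (*110*) JEqI 11 0 133; IAdd 5 15 3; RLoad 3 5; IToR 4 3; RMul 4 13 4;
 (*115*) RAdd 3 3 4; IAdd 4 1 11; RLoad 9 4; RAdd 10 1 9; RCos 11 3;
 (*120*) RMul 11 10 11; RSin 2 3; RMul 2 10 2; IMul 4 11 18; IAdd 4 4 17;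
 (*125*) RStore 4 11; IAdd 4 4 12; RStore 4 2; IAdd 4 4 12; RStore 4 9;
 (*130*) IAdd 3 3 12; IAdd 11 11 12; Jmp 109; IConst 11 0%Z; Jmp 111;
 (*135*) IConst 3 0%Z; IMul 19 0 18; IMov 4 17; IConst 5 3%Z; JEqI 3 19 146;
 (*140*) RLoad 0 4; RStore 5 0; IAdd 3 3 12; IAdd 4 4 12; IAdd 5 5 12;
 (*145*) Jmp 139; RMov 2 1; RConst 0 0%Z; RConst 1 0%Z; IConst 0 1%Z;
 (*150*) Halt; RMov 1 0; Jmp 146 ].

Lemma run_add a b s : run prog (a + b) s = run prog b (run prog a s).
Proof. revert s; induction a; intros; simpl; auto. Qed.

Arguments updR m k v j /.
Arguments updZ m k v j /.
Arguments Nat.eqb !n !m.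

Definition base (n : nat) : nat := (3 * n + 20)%nat.

Lemma updR_same (m : nat -> R) k v : m k = v -> updR m k v = m.
Proof.
  intros H. apply functional_extensionality. intros x. unfold updR.
  destruct (Nat.eqb_spec x k); subst; auto.
Qed.

Lemma updZ_same (m : nat -> Z) k v : m k = v -> updZ m k v = m.
Proof.
  intros H. apply functional_extensionality. intros x. unfold updZ.
  destruct (Nat.eqb_spec x k); subst; auto.
Qed.

Lemma ex_step s c b (Q : config -> Prop) :
  (exists t, (t + S c <= b)%nat /\ Q (run prog t (step prog s))) ->
  exists t, (t + c <= b)%nat /\ Q (run prog t s).
Proof. intros (t & H1 & H2). exists (S t). split. lia. exact H2. Qed.
Lemma ex_start b (Q : config -> Prop) s :
  (exists t, (t + 0 <= b)%nat /\ Q (run prog t s)) ->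
  exists t, (t <= b)%nat /\ Q (run prog t s).
Proof. intros (t & H1 & H2). exists t. split. lia. exact H2. Qed.

(* [go] symbolically executes one instruction and charges it to the step budget. *)
Ltac go := first [apply ex_step | apply ex_start; apply ex_step]; cbn [step prog nth pc rm im updR updZ Nat.eqb].
Ltac fin := exists 0%nat; split; [lia|]; cbn [run].

Ltac rwz z := repeat match goal with H : z ?k = _ |- context [z ?k] => rewrite H end.

Ltac upd := unfold base in *; cbn [updR updZ]; repeat match goal with |- context [Nat.eqb ?a ?b] => destruct (Nat.eqb_spec a b) end; try lia.

Section CopyInput.
Variables (n : nat) (w0 : R) (w : nat -> R).

Definition CopyIn (i : nat) (m : nat -> R) (z : nat -> Z) : Prop :=
  z 0%nat = Z.of_nat n /\ z 1%nat = Z.of_nat (base n) /\ z 12%nat = 1%Z /\ z 13%nat = 0%Z /\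
  z 3%nat = Z.of_nat i /\ z 4%nat = Z.of_nat (S i) /\ z 5%nat = Z.of_nat (base n + i) /\
  m (base n - 1)%nat = w0 /\ (forall j, (j < n)%nat -> m (S j) = w j) /\
  (forall j, (j < i)%nat -> m (base n + j)%nat = w j).

Definition PostInit (s : config) := exists m z, s = Config 12 m z /\ CopyIn 0 m z.

Lemma init_phase : (0 < n)%nat ->
  exists t, (t <= 12)%nat /\ PostInit (run prog t (star_input n w0 w)).
Proof.
  intros Hn. unfold star_input.
  do 7 go.
  destruct (Z.eqb_spec (Z.of_nat n) 0); [lia|].
  do 5 go. fin. eexists _, _; split; [reflexivity|].
  repeat split; cbn [updZ updR Nat.eqb]; try (unfold base; lia).
  - upd; auto.
  - intros j Hj. upd. destruct (Nat.ltb_spec j n); [reflexivity|lia].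

Qed.

Definition PostCopy (s : config) := exists m' z', s = Config 19 m' z' /\ CopyIn n m' z'.

Lemma copy_loop : forall k i m z, (n - i = k)%nat -> (i <= n)%nat -> CopyIn i m z ->
  exists t, (t <= 7 * k + 1)%nat /\ PostCopy (run prog t (Config 12 m z)).
Proof.
  induction k; intros i m z Hk Hi H;
    destruct H as (H0 & H1 & H12 & H13 & H3 & H4 & H5 & Hw0 & Hin & Hc).
  - assert (i = n) by lia. subst i.
    go. rwz z. rewrite Z.eqb_refl. fin. eexists _, _; split; [reflexivity|].
    repeat split; auto.
  - go. rwz z. destruct (Z.eqb_spec (Z.of_nat i) (Z.of_nat n)); [lia|].
    do 6 go. rwz z. rewrite !Nat2Z.id.
    edestruct (IHk (S i)) as (t & Ht & Hr); [| |
    | exists t; split; [|exact Hr]; lia]; try lia.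
    repeat split; cbn [updZ Nat.eqb]; rwz z; try lia.
    * upd. auto.
    * intros j Hj. upd. auto.
    * intros j Hj. upd. rewrite Hin; [f_equal; lia| lia]. apply Hc; lia.
Qed.
End CopyInput.

Section Preprocess.
Variables (n : nat) (w0 : R) (w : nat -> R).

Definition Frame (m : nat -> R) (z : nat -> Z) : Prop :=
  z 0%nat = Z.of_nat n /\ z 1%nat = Z.of_nat (base n) /\ z 12%nat = 1%Z /\ z 13%nat = 0%Z /\
  m 1%nat = w0 /\ (forall j, (j < n)%nat -> m (base n + j)%nat = w j).

Definition ArgInv (i mm : nat) (m : nat -> R) (z : nat -> Z) : Prop :=
  Frame m z /\ z 3%nat = Z.of_nat i /\ z 4%nat = Z.of_nat (base n + i) /\ z 6%nat = Z.of_nat mm /\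
  (mm < i)%nat /\ m 2%nat = w mm /\ (forall j, (j < i)%nat -> w j <= w mm).

Definition PostArg0 (s : config) := exists m z, s = Config 25 m z /\ ArgInv 1 0 m z.

Lemma arg_start m z : (0 < n)%nat -> CopyIn n w0 w n m z ->
  exists t, (t <= 6)%nat /\ PostArg0 (run prog t (Config 19 m z)).
Proof.
  intros Hn (H0 & H1 & H12 & H13 & H3 & H4 & H5 & Hw0 & Hin & Hc).
  do 6 go. rwz z. fin. eexists _, _; split; [reflexivity|].
  unfold ArgInv, Frame. cbn [updZ updR Nat.eqb]. rwz z.
  repeat split; try lia.
  - replace (Z.to_nat (Z.of_nat (base n) - 1)) with (base n - 1)%nat by (unfold base; lia). exact Hw0.
  - intros j Hj. upd. apply Hc; lia.
  - replace (Z.to_nat (Z.of_nat (base n))) with (base n + 0)%nat by lia.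
    upd. apply Hc; lia.
  - intros j Hj. replace j with 0%nat by lia. lra.
Qed.

Definition PostArg (s : config) := exists m z mm, s = Config 34 m z /\ ArgInv n mm m z.

Lemma arg_loop : forall k i mm m z, (n - i = k)%nat -> (1 <= i <= n)%nat -> ArgInv i mm m z ->
  exists t, (t <= 9 * k + 1)%nat /\ PostArg (run prog t (Config 25 m z)).
Proof.
  induction k; intros i mm m z Hk Hi H;
    destruct H as ((H0 & H1 & H12 & H13 & Hw0 & HW) & H3 & H4 & H6 & Hmm & H2 & Hmax).
  - assert (i = n) by lia. subst i.
    go. rwz z. rewrite Z.eqb_refl. fin. exists m, z, mm; split; [reflexivity|].
    repeat split; auto.
  - go. rwz z. destruct (Z.eqb_spec (Z.of_nat i) (Z.of_nat n)); [lia|].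
    do 2 go. rwz z. rewrite !Nat2Z.id. rewrite H2.
    rewrite HW by lia.
    destruct (Rlt_dec (w mm) (w i)) as [Hlt|Hge].
    + do 5 go. rwz z.
      edestruct (IHk (S i) i) as (t & Ht & Hr); [| |
      | exists t; split; [|exact Hr]; lia]; try lia.
      unfold ArgInv, Frame. cbn [updZ updR Nat.eqb]. rwz z.
      repeat split; auto; try lia.
      * intros j Hj. upd. auto.
      * intros j Hj. destruct (Nat.eq_dec j i). subst; lra.
        specialize (Hmax j ltac:(lia)). lra.
    + do 4 go. rwz z.
      edestruct (IHk (S i) mm) as (t & Ht & Hr); [| |
      | exists t; split; [|exact Hr]; lia]; try lia.
      unfold ArgInv, Frame. cbn [updZ updR Nat.eqb]. rwz z.
      repeat split; auto; try lia.
      * intros j Hj. upd. auto.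
      * intros j Hj. destruct (Nat.eq_dec j i). subst; lra. apply Hmax; lia.
Qed.

(* The rotated index as computed by the rotation loops: it reaches n instead of 0 at the
   wrap-around, where the program resets it. *)
Definition rot_reg (mm k : nat) : nat := if Nat.leb (mm + k) n then (mm + k)%nat else (mm + k - n)%nat.

Lemma rot_reg_next mm i : (mm < n)%nat -> (i < n)%nat -> rot_reg mm (S i) = S (rot n mm i).
Proof. intros. unfold rot_reg, rot. destruct (Nat.ltb_spec (mm+i) n); destruct (Nat.leb_spec (mm + S i) n); lia. Qed.
Lemma rot_reg_eq mm i : (mm < n)%nat -> (i < n)%nat -> rot_reg mm i <> n -> rot_reg mm i = rot n mm i.
Proof. intros. unfold rot_reg, rot in *. destruct (Nat.ltb_spec (mm+i) n); destruct (Nat.leb_spec (mm + i) n); lia. Qed.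
Lemma rot_reg_wrap mm i : (mm < n)%nat -> (i < n)%nat -> rot_reg mm i = n -> rot n mm i = 0%nat.
Proof. intros. unfold rot_reg, rot in *. destruct (Nat.ltb_spec (mm+i) n); destruct (Nat.leb_spec (mm + i) n); lia. Qed.

Definition RotInv (k mm : nat) (m : nat -> R) (z : nat -> Z) : Prop :=
  Frame m z /\ z 6%nat = Z.of_nat mm /\ (mm < n)%nat /\ (forall j, (j < n)%nat -> w j <= w mm) /\
  z 3%nat = Z.of_nat k /\ z 5%nat = Z.of_nat (base n + n + k) /\ z 11%nat = Z.of_nat (rot_reg mm k) /\
  (forall j, (j < k)%nat -> m (base n + n + j)%nat = wratio w0 w (rot n mm j)).

Definition PostRot0 (s : config) := exists m z mm, s = Config 37 m z /\ RotInv 0 mm m z.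

Lemma rot_start m z mm : (0 < n)%nat -> ArgInv n mm m z ->
  exists t, (t <= 3)%nat /\ PostRot0 (run prog t (Config 34 m z)).
Proof.
  intros Hn ((H0 & H1 & H12 & H13 & Hw0 & HW) & H3 & H4 & H6 & Hmm & H2 & Hmax).
  do 3 go. rwz z. fin. eexists _, _, mm; split; [reflexivity|].
  unfold RotInv, Frame. cbn [updZ updR Nat.eqb]. rwz z.
  repeat split; auto; try lia.
  unfold rot_reg. destruct (Nat.leb_spec (mm + 0) n); lia.
Qed.

Definition PostRot (s : config) := exists m z mm, s = Config 50 m z /\ RotInv n mm m z.

Lemma rot_loop : forall k i mm m z, (n - i = k)%nat -> (i <= n)%nat -> RotInv i mm m z ->
  exists t, (t <= 13 * k + 1)%nat /\ PostRot (run prog t (Config 37 m z)).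
Proof.
  induction k; intros i mm m z Hk Hi H;
    destruct H as ((H0 & H1 & H12 & H13 & Hw0 & HW) & H6 & Hmm & Hmax & H3 & H5 & H11 & HU).
  - assert (i = n) by lia. subst i.
    go. rwz z. rewrite Z.eqb_refl. fin. exists m, z, mm; split; [reflexivity|].
    repeat split; auto.
  - go. rwz z. destruct (Z.eqb_spec (Z.of_nat i) (Z.of_nat n)); [lia|].
    go. rwz z.
    assert (Hleaf : (rot n mm i < n)%nat) by (apply rot_lt; lia).
    destruct (Z.eqb_spec (Z.of_nat (rot_reg mm i)) (Z.of_nat n)) as [Heq|Hne].
    + assert (Hl0 : rot n mm i = 0%nat).
      { unfold rot_reg, rot in *. destruct (Nat.leb_spec (mm+i) n); destruct (Nat.ltb_spec (mm+i) n); lia. }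
      do 11 go. rwz z. cbn [updZ Nat.eqb]. rwz z.
      rewrite Z.add_0_r, Nat2Z.id, Hw0.
      assert (Hx : m (base n) = w (rot n mm i)) by (rewrite Hl0, <- (HW 0%nat) by lia; f_equal; lia).
      rewrite Hx.
      edestruct (IHk (S i) mm) as (t & Ht & Hr); [| |
      | exists t; split; [|exact Hr]; lia]; try lia.
      unfold RotInv, Frame. cbn [updZ updR Nat.eqb]. rwz z.
      repeat split; auto; try lia.
      all: try (intros j Hj); try (upd; auto; fail).
      * unfold rot_reg, rot in *. destruct (Nat.leb_spec (mm+i) n); destruct (Nat.leb_spec (mm + S i) n); lia.
      * upd.
        -- replace j with i by lia. reflexivity.
        -- apply HU; lia.
    + assert (Hl0 : rot_reg mm i = rot n mm i).
      { unfold rot_reg, rot in *. destruct (Nat.leb_spec (mm+i) n); destruct (Nat.ltb_spec (mm+i) n); lia. }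
      do 9 go. rwz z. cbn [updZ Nat.eqb]. rwz z.
      rewrite <- Nat2Z.inj_add, Nat2Z.id, Hw0, Hl0.
      rewrite HW by lia.
      edestruct (IHk (S i) mm) as (t & Ht & Hr); [| |
      | exists t; split; [|exact Hr]; lia]; try lia.
      unfold RotInv, Frame. cbn [updZ updR Nat.eqb]. rwz z.
      repeat split; auto; try lia.
      all: try (intros j Hj); try (upd; auto; fail).
      * rewrite <- Hl0. unfold rot_reg, rot in *. destruct (Nat.leb_spec (mm+i) n); destruct (Nat.leb_spec (mm + S i) n); lia.
      * upd.
        -- replace j with i by lia. rewrite <- Hl0. reflexivity.
        -- apply HU; lia.
Qed.
End Preprocess.

Ltac rwm m := repeat match goal with H : m ?k = _ |- context [m ?k] => rewrite H end.
Ltac zsimp := repeat rewrite <- Nat2Z.inj_mul; repeat rewrite <- Nat2Z.inj_add; rewrite ?Nat2Z.id;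
  repeat (rewrite Z2Nat.inj_add by lia); rewrite ?Nat2Z.id; change (Z.to_nat 1) with 1%nat; change (Z.to_nat 20) with 20%nat;
  repeat match goal with |- context [Nat.eqb ?a ?b] =>
    first [destruct (Nat.eqb_spec a b); [lia|] | destruct (Nat.eqb_spec a b); [|lia]] end.

Section Chains.
Variables (n : nat) (w0 : R) (w : nat -> R).
Hypothesis Hw0 : 0 < w0.
Hypothesis Hw : forall i, (i < n)%nat -> 0 < w i.

Definition rot_ratio (mm k : nat) : R := wratio w0 w (rot n mm k).

Definition Core (j t0 : nat) (st : nat -> nat) (q : nat -> R) (T : R) (mm : nat) (m : nat -> R) (z : nat -> Z) :=
  Frame n w0 w m z /\ z 6%nat = Z.of_nat mm /\ (mm < n)%nat /\ (forall k, (k < n)%nat -> w k <= w mm) /\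
  (forall k, (k < n)%nat -> m (base n + n + k)%nat = rot_ratio mm k) /\
  z 14%nat = Z.of_nat (base n + n) /\ z 15%nat = Z.of_nat (base n + n + n) /\ z 16%nat = Z.of_nat 20 /\
  z 8%nat = Z.of_nat j /\ (1 <= j <= n)%nat /\
  (forall p, (p <= t0)%nat -> z (20 + p)%nat = Z.of_nat (st p)) /\
  (forall l, (l < j)%nat -> m (base n + n + n + l)%nat = q l) /\ m 5%nat = T /\ m 6%nat = rot_ratio mm 0 /\
  ChainInv (rot_ratio mm) q j t0 st T.

Lemma Core_frame j t0 st q T mm m z m' z' : Core j t0 st q T mm m z ->
  (forall x, (x = 1 \/ x = 5 \/ x = 6 \/ (base n <= x < base n + n + n + j))%nat -> m' x = m x) ->
  (forall x, (x = 0 \/ x = 1 \/ x = 12 \/ x = 13 \/ x = 6 \/ x = 14 \/ x = 15 \/ x = 16 \/ x = 8 \/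
              (20 <= x <= 20 + t0))%nat -> z' x = z x) ->
  Core j t0 st q T mm m' z'.
Proof.
  intros ((H0 & H1 & H12 & H13 & Hw1 & HW) & H6 & Hmm & Hmax & HU & H14 & H15 & H16 & H8 & Hj & Hst & HQ & H5 & H6' & HSI) Hm Hz.
  unfold Core, Frame.
  destruct HSI as (? & ? & ? & ? & ? & [? ?] & ? & ? & ?).
  repeat split; auto.
  all: try (intros; first [rewrite Hz by lia | rewrite Hm by (unfold base in *; lia)]; auto).
  all: try lia.
Qed.

Definition popped j t0 t st q mm cand :=
  forall p, (t < p <= t0)%nat -> q (st p) + sep_angle (rot_ratio mm (st p)) (rot_ratio mm j) <= cand /\ rot_ratio mm (st p) < rot_ratio mm j.
Definition cand_attained j q mm cand := cand = 0 \/ exists i, (i < j)%nat /\ cand = q i + sep_angle (rot_ratio mm i) (rot_ratio mm j).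

Definition PopInv j t0 t st q T cand mm m z :=
  Core j t0 st q T mm m z /\ (j < n)%nat /\ z 7%nat = Z.of_nat t /\ (t <= t0)%nat /\
  m 7%nat = rot_ratio mm j /\ m 8%nat = cand /\ popped j t0 t st q mm cand /\ cand_attained j q mm cand.

Definition PostPop j t0 t st q T mm (s : config) := exists m z cand,
  s = Config 82 m z /\ Core j t0 st q T mm m z /\ (j < n)%nat /\ z 7%nat = Z.of_nat t /\ (t <= t0)%nat /\
  m 7%nat = rot_ratio mm j /\ m 8%nat = cand /\ popped j t0 t st q mm cand /\ cand_attained j q mm cand /\
  q (st t) + sep_angle (rot_ratio mm (st t)) (rot_ratio mm j) <= cand /\ rot_ratio mm j <= rot_ratio mm (st t).

Definition BodyPost j t0 t st q T mm (s : config) :=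
  PostPop j t0 t st q T mm s \/
  (0 < t)%nat /\ exists m z cand, s = Config 64 m z /\ PopInv j t0 (t - 1) st q T cand mm m z.

Lemma pop_body j t0 st q T mm : (forall k, (k < n)%nat -> rot_ratio mm k <= rot_ratio mm 0) ->
  forall t m z cand, PopInv j t0 t st q T cand mm m z ->
  exists s, (s <= 16)%nat /\ BodyPost j t0 t st q T mm (run prog s (Config 64 m z)).
Proof.
  intros Hmax0 t m z cand Hinv.
  pose proof Hinv as (HC & Hjn & H7 & Ht & Hm7 & Hm8 & Hpop & Hcatt).
  pose proof HC as ((H0 & H1 & H12 & H13 & Hw1 & HW) & H6 & Hmm & Hmax & HU & H14 & H15 & H16 & H8 & Hj & Hst & HQ & H5 & H6' & HSI).
  pose proof HSI as (Ht0 & Hs0 & Hinc & Hstj & Hsound & Hatt & Hdom & HT1 & HT2).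
  assert (Hstp : forall p, (p <= t0)%nat -> (st p < j)%nat) by
    (intros p Hp; destruct (Nat.eq_dec p t0); [subst; auto|
     pose proof (stack_increasing st t0 Hinc p t0 ltac:(lia) ltac:(lia)); lia]).
  assert (HB : (20 <= base n)%nat) by (unfold base; lia).
  pose proof (Hstp t Ht) as Hstt.
  do 12 go; rwz z; zsimp; rewrite Hst by lia; zsimp.
  rewrite HU by lia; rewrite HQ by lia; rwm m.
  rewrite sep_angle_twice_asin.
  match goal with |- context [Rlt_dec _ ?v] => set (val := v) end.
  set (cand' := if Rlt_dec cand val then val else cand).
  assert (Hc1 : cand <= cand' /\ val <= cand') by (unfold cand'; destruct (Rlt_dec cand val); lra).
  assert (Hc2 : cand_attained j q mm cand').
  { unfold cand'. destruct (Rlt_dec cand val); auto. unfold cand_attained; right. exists (st t). split; [exact Hstt|reflexivity]. }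
  assert (Hgoal : exists s, (s + 13 <= 16)%nat /\ BodyPost j t0 t st q T mm
     (run prog s (Config 78 (updR (updR (updR (updR (updR (updR (updR (updR m 9 (rot_ratio mm (st t))) 11 (q (st t)))
        10 (rot_ratio mm (st t) * rot_ratio mm j)) 10 (sqrt (rot_ratio mm (st t) * rot_ratio mm j))) 10 (asin (sqrt (rot_ratio mm (st t) * rot_ratio mm j))))
        10 (sep_angle (rot_ratio mm (st t)) (rot_ratio mm j))) 10 val) 8 cand')
      (updZ (updZ (updZ (updZ z 9 (Z.of_nat (20 + t))) 10 (Z.of_nat (st t))) 4 (Z.of_nat (base n + n + st t)))
                 5 (Z.of_nat (base n + n + n + st t)))))).
  { go. cbn [updR Nat.eqb]. rwm m.
    assert (HC' : forall m' z', (forall x, (x = 1 \/ x = 5 \/ x = 6 \/ (base n <= x < base n + n + n + j))%nat -> m' x = m x) ->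
      (forall x, (x = 0 \/ x = 1 \/ x = 12 \/ x = 13 \/ x = 6 \/ x = 14 \/ x = 15 \/ x = 16 \/ x = 8 \/
              (20 <= x <= 20 + t0))%nat -> z' x = z x) -> Core j t0 st q T mm m' z')
      by (intros; eapply Core_frame; eauto).
    destruct (Rlt_dec (rot_ratio mm (st t)) (rot_ratio mm j)) as [Hp|Hp].
    - assert (Htpos : (0 < t)%nat) by (destruct t; [rewrite Hs0 in Hp; specialize (Hmax0 j Hjn); lra | lia]).
      do 2 go. fin. right. split; [exact Htpos|].
      + eexists _, _, cand'. split; [reflexivity|].
        unfold PopInv. split; [apply HC'; intros x Hx; upd; auto|].
        cbn [updR updZ Nat.eqb]. rwz z. rwm m.
        split; [auto|]. split; [lia|]. split; [lia|]. split; [auto|]. split; [auto|]. split; [|auto].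
        intros p Hp'. destruct (Nat.eq_dec p t).
        * subst p. split; [|auto]. unfold val in Hc1. lra.
        * destruct (Hpop p ltac:(lia)). split; lra.
    - go. fin. left. eexists _, _, cand'. split; [reflexivity|].
      split; [apply HC'; intros x Hx; upd; auto|].
      cbn [updR updZ Nat.eqb]. rwz z. rwm m.
      split; [auto|]. split; [lia|]. split; [lia|]. split; [auto|]. split; [auto|]. split.
      { intros p Hp'. destruct (Hpop p ltac:(lia)). split; lra. }
      split; [auto|]. split; [unfold val in Hc1; lra|lra]. }
  destruct (Rlt_dec cand val) as [Hlt|Hge].
  - go. destruct Hgoal as (s & Hs & Hp). exists s. split. lia.
    unfold cand' in Hp. destruct (Rlt_dec cand val); [|lra]. exact Hp.
  - go. destruct Hgoal as (s & Hs & Hp). exists s. split. lia.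
    unfold cand' in Hp. destruct (Rlt_dec cand val); [lra|].
    rewrite (updR_same _ 8 cand) in Hp by (cbn [updR Nat.eqb]; auto). exact Hp.
Qed.

Lemma pop_loop j t0 st q T mm : (forall k, (k < n)%nat -> rot_ratio mm k <= rot_ratio mm 0) ->
  forall t m z cand, PopInv j t0 t st q T cand mm m z ->
  exists s tf, (tf <= t)%nat /\ (s + 16 * tf <= 16 * t + 16)%nat /\ PostPop j t0 tf st q T mm (run prog s (Config 64 m z)).
Proof.
  intros Hmax0. induction t; intros m z cand Hinv;
    destruct (pop_body j t0 st q T mm Hmax0 _ m z cand Hinv) as (s1 & Hs1 & [Hp|(Ht & m' & z' & cand' & Hr & Hi)]).
  - exists s1, 0%nat. split; [lia|]. split; [lia|auto].
  - lia.
  - exists s1, (S t). split; [lia|]. split; [lia|auto].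
  - replace (S t - 1)%nat with t in Hi by lia.
    destruct (IHt m' z' cand' Hi) as (s2 & tf & Htf & Hs2 & Hp2).
    exists (s1 + s2)%nat, tf. split. lia. split. lia. rewrite run_add, Hr. exact Hp2.
Qed.

Lemma ex_seq s1 c b (Q : config -> Prop) Y X : run prog s1 Y = X ->
  (exists s, (s + (c + s1) <= b)%nat /\ Q (run prog s X)) -> exists s, (s + c <= b)%nat /\ Q (run prog s Y).
Proof. intros HX (s & Hs & HQ). exists (s1 + s)%nat. split. lia. rewrite run_add, HX. exact HQ. Qed.

Lemma rot_ratio_props mm : (mm < n)%nat -> (forall k, (k < n)%nat -> w k <= w mm) ->
  open_unit_on (rot_ratio mm) n /\ (forall k, (k < n)%nat -> rot_ratio mm k <= rot_ratio mm 0).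
Proof.
  intros Hmm Hmax. split.
  - exact (wratio_rot_bounds n mm w0 w Hw0 Hw Hmm).
  - intros k Hk. unfold rot_ratio.
    replace (rot n mm 0) with mm by (unfold rot; destruct (Nat.ltb_spec (mm + 0) n); lia).
    pose proof (rot_lt n mm k Hmm Hk). apply wratio_le; auto.
Qed.

Definition StackInv j t st q T mm m z := Core j t st q T mm m z /\ z 7%nat = Z.of_nat t.
Definition PostStack mm (s : config) := exists m z st q T t,
  s = Config 97 m z /\ StackInv n t st q T mm m z.

Definition PostSt0 mm (s : config) := exists m z, s = Config 60 m z /\
  StackInv 1 0 (fun _ => 0%nat) (fun _ => 0) 0 mm m z.

Lemma stack_start m z mm : (0 < n)%nat -> RotInv n w0 w n mm m z ->
  exists t, (t <= 10)%nat /\ PostSt0 mm (run prog t (Config 50 m z)).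
Proof.
  intros Hn ((H0 & H1 & H12 & H13 & Hw1 & HW) & H6 & Hmm & Hmax & H3 & H5 & H11 & HU).
  assert (HB : (20 <= base n)%nat) by (unfold base; lia).
  do 10 go. rwz z. cbn [updZ updR Nat.eqb]. rwz z. zsimp. fin.
  eexists _, _; split; [reflexivity|].
  split; [|cbn [updZ Nat.eqb]; reflexivity].
  unfold Core, Frame. cbn [updZ updR Nat.eqb]. rwz z.
  split; [split; [auto|split; [auto|split; [auto|split; [auto|split]]]]|].
  { upd. auto. }
  { intros i Hi. upd. auto. }
  split; [auto|]. split; [auto|]. split; [auto|].
  split; [intros i Hi; upd; rewrite HU by lia; reflexivity|].
  zsimp.
  split; [reflexivity|]. split; [reflexivity|]. split; [reflexivity|]. split; [reflexivity|]. split; [lia|].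
  split; [intros p Hp; replace p with 0%nat by lia; upd; reflexivity|].
  split; [intros l Hl; replace l with 0%nat by lia; upd; reflexivity|].
  split; [upd; reflexivity|]. split.
  { rewrite <- (Nat.add_0_r (base n + n)). rewrite HU by lia. reflexivity. }
  apply ChainInv_init; reflexivity.
Qed.

Lemma outer_loop mm : forall k j t st q T m z, (n - j = k)%nat -> StackInv j t st q T mm m z ->
  exists s, (s <= 50 * k + 16 * t + 1)%nat /\ PostStack mm (run prog s (Config 60 m z)).
Proof.
  induction k; intros j t st q T m z Hk (HC & H7);
  pose proof HC as ((H0 & H1 & H12 & H13 & Hw1 & HW) & H6 & Hmm & Hmax & HU & H14 & H15 & H16 & H8 & Hj & Hst & HQ & H5 & H6' & HSI);
  destruct (rot_ratio_props mm Hmm Hmax) as [Ha Hmax0].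
  - assert (j = n) by lia. subst j.
    go. rwz z. rewrite Z.eqb_refl. fin. do 6 eexists; split; [reflexivity|]. exact (conj HC H7).
  - go. rwz z. destruct (Z.eqb_spec (Z.of_nat j) (Z.of_nat n)); [lia|].
    assert (HB : (20 <= base n)%nat) by (unfold base; lia).
    do 3 go. rwz z. zsimp. rewrite HU by lia.
    match goal with |- context [run prog _ (Config 64 ?m1 ?z1)] =>
      assert (HP : PopInv j t t st q T 0 mm m1 z1) end.
    { split; [eapply Core_frame; [exact HC| |]; intros x Hx; upd; auto|].
      cbn [updR updZ Nat.eqb]. rwz z. split; [lia|]. split; [auto|]. split; [lia|].
      split; [auto|]. split; [auto|]. split; [intros p Hp; lia|left; auto]. }
    destruct (pop_loop j t st q T mm Hmax0 _ _ _ _ HP) as (s1 & tf & Htf & Hs1 & (m2 & z2 & cand & Heq & HC2 & _ & H7' & Htf0 & Hm7 & Hm8 & Hpop & Hcatt & Htop & Hstop)).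
    eapply ex_seq; [exact Heq|].
    clear HC H0 H1 H12 H13 Hw1 HW H6 HU H14 H15 H16 H8 Hst HQ H5 H6' H7 m z HP Heq.
    pose proof HC2 as ((H0 & H1 & H12 & H13 & Hw1 & HW) & H6 & _ & _ & HU & H14 & H15 & H16 & H8 & _ & Hst & HQ & H5 & H6' & _).
    do 8 go. rwz z2. zsimp. rwm m2. rewrite sep_angle_twice_asin.
    set (val2 := cand + sep_angle (rot_ratio mm j) (rot_ratio mm 0)).
    assert (HSI2 : ChainInv (rot_ratio mm) (q_push q j cand) (S j) (S tf) (st_push j tf st) (T_push (rot_ratio mm) j T cand)).
    { apply (ChainInv_push (rot_ratio mm) q n j t tf st T cand); auto; try lia. }
    assert (Hgoal : forall m3, m3 5%nat = T_push (rot_ratio mm) j T cand ->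
      (forall x, x <> 5%nat -> m3 x = updR (updR (updR (updR (updR (updR m2 (base n + n + n + j) cand) 10
                          (rot_ratio mm j * rot_ratio mm 0)) 10 (sqrt (rot_ratio mm j * rot_ratio mm 0)))
                    10 (asin (sqrt (rot_ratio mm j * rot_ratio mm 0)))) 10 (sep_angle (rot_ratio mm j) (rot_ratio mm 0))) 10 val2 x) ->
      exists s, (s + S (S (S (S (S (S (S (S (S (4 + s1))))))))) <= 50 * S k + 16 * t + 1)%nat /\
        PostStack mm (run prog s (Config 92 m3 (updZ z2 5 (Z.of_nat (base n + n + n + j)))))).
    { intros m3 Hm35 Hm3.
      do 5 go. rwz z2. cbn [updZ Nat.eqb]. rwz z2. zsimp.
      edestruct (IHk (S j) (S tf) (st_push j tf st) (q_push q j cand) (T_push (rot_ratio mm) j T cand)) as (s4 & Hs4 & HP4);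
        [| |exists s4; split; [|exact HP4]; lia]; [lia|].
      split; [|cbn [updZ Nat.eqb]; zsimp; lia].
      unfold Core, Frame. cbn [updZ Nat.eqb]. rwz z2.
      split; [split; [auto|split; [auto|split; [auto|split; [auto|split]]]]|].
      { rewrite Hm3 by lia. upd; auto. }
      { intros i Hi. rewrite Hm3 by (unfold base in *; lia). upd; auto. }
      split; [auto|]. split; [auto|]. split; [auto|].
      split; [intros i Hi; rewrite Hm3 by (unfold base in *; lia); upd; auto|].
      split; [auto|]. split; [auto|]. split; [auto|]. split; [lia|]. split; [lia|].
      split.
      { intros p Hp. unfold st_push. upd; try reflexivity. apply Hst; lia. }
      split.
      { intros l Hl. rewrite Hm3 by (unfold base in *; lia). unfold q_push. upd; try reflexivity. apply HQ; lia. }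
      split; [auto|]. split; [rewrite Hm3 by lia; upd; auto|]. exact HSI2. }
    destruct (Rlt_dec T val2) as [Hlt|Hge].
    + go. apply Hgoal.
      * cbn [updR Nat.eqb]. unfold T_push. fold val2. destruct (Rlt_dec T val2); [auto|lra].
      * intros x Hx. cbn [updR]. destruct (Nat.eqb_spec x 5); [lia|auto].
    + go. apply Hgoal.
      * cbn [updR Nat.eqb]. upd. unfold T_push. fold val2. destruct (Rlt_dec T val2); [lra|auto].
      * intros x Hx. reflexivity.
Qed.

End Chains.
Section Output.
Variables (n : nat) (w0 : R) (w : nat -> R).

Definition OutInv k mm q d (m : nat -> R) (z : nat -> Z) :=
  Frame n w0 w m z /\ z 6%nat = Z.of_nat mm /\ (mm < n)%nat /\ z 15%nat = Z.of_nat (base n + n + n) /\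
  z 17%nat = Z.of_nat (base n + n + n + n) /\ z 18%nat = Z.of_nat 3 /\ z 3%nat = Z.of_nat k /\
  z 11%nat = Z.of_nat (rot_reg n mm k) /\ m 13%nat = d /\
  (forall l, (l < n)%nat -> m (base n + n + n + l)%nat = q l) /\
  (forall k', (k' < k)%nat ->
     m (base n + n + n + n + 3 * rot n mm k')%nat = (w0 + w (rot n mm k')) * cos (spread q d k') /\
     m (base n + n + n + n + 3 * rot n mm k' + 1)%nat = (w0 + w (rot n mm k')) * sin (spread q d k') /\
     m (base n + n + n + n + 3 * rot n mm k' + 2)%nat = w (rot n mm k')).

Definition DecPost T mm q (s : config) :=
  (2 * PI <= T /\ exists m z, s = Config 101 m z /\ z 0%nat = 0%Z) \/
  (T < 2 * PI /\ exists m z, s = Config 109 m z /\ OutInv 0 mm q ((2 * PI - T) / INR n) m z).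

Lemma decide_phase t st q T mm m z : (0 < n)%nat -> StackInv n w0 w n t st q T mm m z ->
  exists s, (s <= 12)%nat /\ DecPost T mm q (run prog s (Config 97 m z)).
Proof.
  intros Hn (HC & H7).
  pose proof HC as ((H0 & H1 & H12 & H13 & Hw1 & HW) & H6 & Hmm & Hmax & HU & H14 & H15 & H16 & H8 & Hj & Hst & HQ & H5 & H6' & HSI).
  assert (HB : (20 <= base n)%nat) by (unfold base; lia).
  do 3 go. cbn [updR Nat.eqb]. rwm m.
  destruct (Rlt_dec T (PI + PI)) as [Hlt|Hge].
  - do 7 go. rwz z. cbn [updZ updR Nat.eqb]. rwz z. rwm m. zsimp. fin. right. split; [lra|].
    eexists _, _; split; [reflexivity|].
    unfold OutInv, Frame. cbn [updZ updR Nat.eqb]. rwz z.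
    split; [split; [auto|split; [auto|split; [auto|split; [auto|split]]]]|].
    { upd. auto. }
    { intros i Hi. upd. auto. }
    split; [auto|]. split; [auto|]. split; [auto|]. split; [reflexivity|]. split; [reflexivity|]. split; [reflexivity|].
    split; [unfold rot_reg; destruct (Nat.leb_spec (mm + 0) n); f_equal; lia|].
    split; [rewrite INR_IZR_INZ; field; apply not_0_IZR; lia|].
    split; [intros l Hl; upd; auto|].
    intros; lia.
  - do 2 go. fin. left. split; [lra|]. eexists _, _; split; [reflexivity|]. reflexivity.
Qed.

Definition PostOut mm q d (s : config) := exists m z, s = Config 135 m z /\ OutInv n mm q d m z.

Lemma out_loop mm q d : forall k i m z, (n - i = k)%nat -> (i <= n)%nat -> OutInv i mm q d m z ->
  exists s, (s <= 26 * k + 1)%nat /\ PostOut mm q d (run prog s (Config 109 m z)).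
Proof.
  induction k; intros i m z Hk Hi H;
    pose proof H as ((H0 & H1 & H12 & H13 & Hw1 & HW) & H6 & Hmm & H15 & H17 & H18 & H3 & H11 & H13' & HQ & HO).
  - assert (i = n) by lia. subst i.
    go. rwz z. rewrite Z.eqb_refl. fin. eexists _, _; split; [reflexivity|exact H].
  - go. rwz z. destruct (Z.eqb_spec (Z.of_nat i) (Z.of_nat n)); [lia|].
    assert (HB : (20 <= base n)%nat) by (unfold base; lia).
    pose proof (rot_lt n mm i Hmm ltac:(lia)) as Hlf.
    assert (Hgoal : exists s, (s + 4 <= 26 * S k + 1)%nat /\
       PostOut mm q d (run prog s (Config 111 m (updZ z 11 (Z.of_nat (rot n mm i)))))).
    { do 22 go. cbn [updZ updR Nat.eqb]. rwz z. rwm m. zsimp. rewrite <- INR_IZR_INZ.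
      rewrite HQ by lia. rewrite HW by lia.
      edestruct (IHk (S i)) as (s & Hs & HP); [| |
        | exists s; split; [|exact HP]; lia]; try lia.
      unfold OutInv, Frame. cbn [updZ Nat.eqb]. rwz z.
      split; [split; [auto|split; [auto|split; [auto|split; [auto|split]]]]|].
      { upd. auto. }
      { intros j Hj. upd. auto. }
      split; [auto|]. split; [auto|]. split; [auto|]. split; [auto|]. split; [auto|]. split; [lia|].
      split; [rewrite rot_reg_next by lia; lia|].
      split; [upd; auto|].
      split; [intros l Hl; upd; auto|].
      intros k' Hk'.
      destruct (Nat.eq_dec k' i) as [->|Hne].
      - split; [|split]; upd; unfold spread; reflexivity.
      - pose proof (rot_inj n mm k' i Hmm ltac:(lia) ltac:(lia) Hne).
        destruct (HO k' ltac:(lia)) as (E1 & E2 & E3).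
        split; [|split]; upd; auto. }
    go. rwz z.
    destruct (Z.eqb_spec (Z.of_nat (rot_reg n mm i)) (Z.of_nat n)) as [Heq|Hne].
    + assert (Hl0 : rot n mm i = 0%nat) by (apply rot_reg_wrap; lia).
      rewrite Hl0 in Hgoal. do 2 go. destruct Hgoal as (s & Hs & HP). exists s. split; [lia|exact HP].
    + rewrite <- (rot_reg_eq n mm i) in Hgoal by lia. rewrite <- H11 in Hgoal. rewrite updZ_same in Hgoal by reflexivity.
      destruct Hgoal as (s & Hs & HP). exists s. split; [lia|exact HP].
Qed.

Definition CoInv t (o : nat -> R) (m : nat -> R) (z : nat -> Z) :=
  z 3%nat = Z.of_nat t /\ z 19%nat = Z.of_nat (n * 3) /\ z 4%nat = Z.of_nat (base n + n + n + n + t) /\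
  z 5%nat = Z.of_nat (3 + t) /\ z 12%nat = 1%Z /\ m 1%nat = w0 /\ (t <= n * 3)%nat /\
  (forall x, (x < n * 3)%nat -> m (base n + n + n + n + x)%nat = o x) /\
  (forall x, (x < t)%nat -> m (3 + x)%nat = o x).

Definition Final (o : nat -> R) (s : config) :=
  pc s = 150%nat /\ im s 0%nat = 1%Z /\ rm s 0%nat = 0 /\ rm s 1%nat = 0 /\ rm s 2%nat = w0 /\
  forall x, (x < n * 3)%nat -> rm s (3 + x)%nat = o x.

Lemma final_steps t o m z : CoInv t o m z -> (t = n * 3)%nat ->
  exists s, (s <= 5)%nat /\ Final o (run prog s (Config 139 m z)).
Proof.
  intros (H3 & H19 & H4 & H5 & H12 & Hw1 & Ht & Ho & Hc) ->.
  go. rwz z. rewrite Z.eqb_refl. do 4 go. fin. unfold Final. cbn [pc rm im updR updZ Nat.eqb].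
  split; [reflexivity|]. split; [reflexivity|]. split; [reflexivity|]. split; [reflexivity|]. split; [auto|].
  intros x Hx. upd. apply Hc; lia.
Qed.

Lemma co_loop o : forall k t m z, (n * 3 - t = k)%nat -> CoInv t o m z ->
  exists s, (s <= 7 * k + 5)%nat /\ Final o (run prog s (Config 139 m z)).
Proof.
  induction k; intros t m z Hk H.
  - destruct (final_steps t o m z H) as (s & Hs & HF). destruct H as (_ & _ & _ & _ & _ & _ & Ht & _). lia.
    exists s. split; [lia|exact HF].
  - pose proof H as (H3 & H19 & H4 & H5 & H12 & Hw1 & Ht & Ho & Hc).
    go. rwz z. destruct (Z.eqb_spec (Z.of_nat t) (Z.of_nat (n * 3))); [lia|].
    assert (HB : (20 <= base n)%nat) by (unfold base; lia).
    do 6 go. rwz z. cbn [updZ updR Nat.eqb]. rwz z. zsimp.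
    edestruct (IHk (S t)) as (s & Hs & HP); [|
        | exists s; split; [|exact HP]; lia]; try lia.
    unfold CoInv. cbn [updZ Nat.eqb]. rwz z.
    split; [lia|]. split; [auto|]. split; [lia|]. split; [lia|]. split; [auto|].
    split; [upd; auto|]. split; [lia|]. split.
    + intros x Hx. upd. auto.
    + intros x Hx. upd.
      * replace x with t by lia. rewrite Ho by lia. f_equal; lia.
      * apply Hc; lia.
Qed.

Lemma co_start mm q d m z : OutInv n mm q d m z ->
  exists s, (s <= 21 * n + 10)%nat /\ Final (fun x => m (base n + n + n + n + x)%nat) (run prog s (Config 135 m z)).
Proof.
  intros ((H0 & H1 & H12 & H13 & Hw1 & HW) & H6 & Hmm & H15 & H17 & H18 & H3 & H11 & H13' & HQ & HO).
  assert (HB : (20 <= base n)%nat) by (unfold base; lia).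
  do 4 go. rwz z. cbn [updZ updR Nat.eqb]. rwz z. zsimp.
  match goal with |- context [run prog _ (Config 139 ?m1 ?z1)] =>
    assert (HCo : CoInv 0 (fun x => m (base n + n + n + n + x)%nat) m1 z1) end.
  { unfold CoInv. cbn [updZ Nat.eqb].
    split; [reflexivity|]. split; [reflexivity|]. split; [f_equal; lia|]. split; [reflexivity|].
    split; [auto|]. split; [upd; auto|]. split; [lia|]. split.
    + intros x Hx. upd. auto.
    + intros; lia. }
  destruct (co_loop _ (n * 3) 0%nat _ _ ltac:(lia) HCo) as (s & Hs & HP).
  exists s. split; [lia|exact HP].
Qed.

End Output.

Lemma is_weighted_star_rep_ext n w0 w c0 r0 c r c' r' : is_weighted_star_rep n w0 w c0 r0 c r ->
  (forall i, (i < n)%nat -> c' i = c i) -> (forall i, (i < n)%nat -> r' i = r i) ->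
  is_weighted_star_rep n w0 w c0 r0 c' r'.
Proof.
  intros ((lam & Hl & Hr0 & Hr) & Ht & Ha & (theta & rho & Hc & Hinc & Hlast)) Hc' Hr'.
  split; [|split; [|split]].
  - exists lam. split; auto. split; auto. intros i Hi. rewrite Hr'; auto.
  - intros i Hi. rewrite Hc', Hr'; auto.
  - intros i j Hi Hj Hij. rewrite !Hc', !Hr'; auto.
  - exists theta, rho. split; [|split; auto]. intros i Hi. rewrite Hc'; auto.
Qed.

Definition correct_output (n : nat) (w0 : R) (w : nat -> R) (s : config) : Prop :=
  halted prog s /\ (out_yes s <-> has_weighted_star_rep n w0 w) /\
  (out_yes s -> is_weighted_star_rep n w0 w (out_c0 s) (out_r0 s) (out_c s) (out_r s)).

Lemma final_correct n w0 w o s : Final n w0 o s ->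
  is_weighted_star_rep n w0 w (0, 0) w0
    (fun i => (o (3 * i), o (3 * i + 1))%nat) (fun i => o (3 * i + 2)%nat) ->
  correct_output n w0 w s.
Proof.
  intros (Hpc & Hyes & Hr0 & Hr1 & Hr2 & Hout) Hrep.
  assert (Hrep' : is_weighted_star_rep n w0 w (out_c0 s) (out_r0 s) (out_c s) (out_r s)).
  { unfold out_c0, out_r0. rewrite Hr0, Hr1, Hr2.
    apply (is_weighted_star_rep_ext _ _ _ _ _ _ _ _ _ Hrep); intros i Hi; unfold out_c, out_r.
    - rewrite <- !Hout by lia. f_equal; f_equal; lia.
    - rewrite <- Hout by lia. f_equal; lia. }
  split; [unfold halted; rewrite Hpc; reflexivity|].
  split; [|intros; exact Hrep'].
  split; [intros; exists (out_c0 s), (out_r0 s), (out_c s), (out_r s); exact Hrep'|intros; exact Hyes].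
Qed.

Lemma empty_star_correct w0 w :
  exists t, (t <= 13)%nat /\ correct_output 0 w0 w (run prog t (star_input 0 w0 w)).
Proof.
  assert (Hrun : exists t, (t <= 13)%nat /\ Final 0 w0 (fun _ => 0) (run prog t (star_input 0 w0 w))).
  { unfold star_input. do 13 go. fin. unfold Final. cbn [pc rm im updR updZ Nat.eqb].
    repeat split; first [reflexivity | intros; lia]. }
  destruct Hrun as (t & Ht & HF).
  exists t. split; [exact Ht|]. apply (final_correct _ _ _ _ _ HF).
  split; [|split; [|split]].
  - exists 1. split; [lra|]. split; [ring|]. intros; lia.
  - intros; lia.
  - intros; lia.
  - exists (fun _ => 0), (fun _ => 0). split; [intros; lia|]. split; intros; lia.
Qed.

Lemma run_to_decision n w0 w : 0 < w0 -> (forall i, (i < n)%nat -> 0 < w i) -> (0 < n)%nat ->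
  exists t tt st q T mm m z, (t <= 80 * n + 40)%nat /\
    run prog t (star_input n w0 w) = Config 97 m z /\ StackInv n w0 w n tt st q T mm m z.
Proof.
  intros Hw0 Hw Hn.
  destruct (init_phase n w0 w Hn) as (t1 & Ht1 & (m1 & z1 & E1 & I1)).
  destruct (copy_loop n w0 w n 0 m1 z1 ltac:(lia) ltac:(lia) I1) as (t2 & Ht2 & (m2 & z2 & E2 & I2)).
  destruct (arg_start n w0 w m2 z2 Hn I2) as (t3 & Ht3 & (m3 & z3 & E3 & I3)).
  destruct (arg_loop n w0 w (n - 1) 1 0 m3 z3 ltac:(lia) ltac:(lia) I3)
    as (t4 & Ht4 & (m4 & z4 & mm & E4 & I4)).
  destruct (rot_start n w0 w m4 z4 mm Hn I4) as (t5 & Ht5 & (m5 & z5 & mm1 & E5 & I5)).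
  destruct (rot_loop n w0 w n 0 mm1 m5 z5 ltac:(lia) ltac:(lia) I5)
    as (t6 & Ht6 & (m6 & z6 & mm2 & E6 & I6)).
  destruct (stack_start n w0 w m6 z6 mm2 Hn I6) as (t7 & Ht7 & (m7 & z7 & E7 & I7)).
  destruct (outer_loop n w0 w Hw0 Hw mm2 (n - 1) 1 0 _ _ _ m7 z7 ltac:(lia) I7)
    as (t8 & Ht8 & (m8 & z8 & st & q & T & tt & E8 & I8)).
  exists (t1 + t2 + t3 + t4 + t5 + t6 + t7 + t8)%nat, tt, st, q, T, mm2, m8, z8.
  split; [lia|]. split; [|exact I8].
  rewrite !run_add, E1, E2, E3, E4, E5, E6, E7, E8. reflexivity.
Qed.

Lemma rejection_sound n w0 w tt st q T mm m z :
  0 < w0 -> (forall i, (i < n)%nat -> 0 < w i) -> StackInv n w0 w n tt st q T mm m z ->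
  2 * PI <= T -> ~ has_weighted_star_rep n w0 w.
Proof.
  intros Hw0 Hw ((_ & _ & Hmm & Hmax & _ & _ & _ & _ & _ & _ & _ & _ & _ & _ & HSI) & _) HT
    (c0 & r0 & c & r & Hrep).
  destruct (rot_ratio_props n w0 w Hw0 Hw mm Hmm Hmax) as [Ha _].
  destruct HSI as (_ & _ & _ & _ & _ & Hatt & _ & Hcyc).
  destruct (separated_of_star_rep n mm w0 w Hw0 Hw Hmm c0 r0 c r Hrep) as (P & HP0 & HP).
  pose proof (cycle_length_lt_2PI (rot_ratio n w0 w mm) q n T Hatt Hcyc P HP0 HP). lra.
Qed.

Lemma acceptance_correct n w0 w mm q T m z :
  0 < w0 -> (forall i, (i < n)%nat -> 0 < w i) -> (0 < n)%nat ->
  (forall k, (k < n)%nat -> w k <= w mm) -> chain_sound (rot_ratio n w0 w mm) q n ->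
  q 0%nat = 0 -> cycle_length (rot_ratio n w0 w mm) q n T -> T < 2 * PI ->
  OutInv n w0 w 0 mm q ((2 * PI - T) / INR n) m z ->
  exists t, (t <= 50 * n + 20)%nat /\ correct_output n w0 w (run prog t (Config 109 m z)).
Proof.
  intros Hw0 Hw Hn Hmax Hsound Hq0 Hcyc HT Hout0.
  set (d := (2 * PI - T) / INR n) in *.
  pose proof Hout0 as (_ & _ & Hmm & _).
  destruct (rot_ratio_props n w0 w Hw0 Hw mm Hmm Hmax) as [Ha Hamax].
  destruct (out_loop n w0 w mm q d n 0 m z ltac:(lia) ltac:(lia) Hout0)
    as (t1 & Ht1 & (m1 & z1 & E1 & Hout1)).
  destruct (co_start n w0 w mm q d m1 z1 Hout1) as (t2 & Ht2 & HF).
  exists (t1 + t2)%nat. split; [lia|]. rewrite run_add, E1.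
  pose proof Hout1 as (_ & _ & _ & _ & _ & _ & _ & _ & _ & _ & HO).
  destruct (spread_separated (rot_ratio n w0 w mm) q n T Ha Hamax Hsound Hq0 Hcyc HT Hn)
    as [Hsep Hrange].
  pose proof (star_rep_of_separated n mm w0 w Hw0 Hw Hmm (spread q d) Hsep Hrange) as Hrep.
  apply (final_correct _ _ _ _ _ HF).
  apply (is_weighted_star_rep_ext _ _ _ _ _ _ _ _ _ Hrep); intros i Hi;
    pose proof (unrot_lt n mm i Hmm Hi) as Hk;
    destruct (HO (unrot n mm i) Hk) as (O1 & O2 & O3);
    rewrite rot_unrot in O1, O2, O3 by auto.
  - unfold leaf_center. rewrite <- O1, <- O2. f_equal; f_equal; lia.
  - rewrite <- O3. f_equal; lia.
Qed.

Lemma nonempty_star_correct n w0 w : 0 < w0 -> (forall i, (i < n)%nat -> 0 < w i) -> (0 < n)%nat ->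
  exists t, (t <= 200 * (n + 1))%nat /\ correct_output n w0 w (run prog t (star_input n w0 w)).
Proof.
  intros Hw0 Hw Hn.
  destruct (run_to_decision n w0 w Hw0 Hw Hn) as (t1 & tt & st & q & T & mm & m & z & Ht1 & E1 & I1).
  destruct (decide_phase n w0 w tt st q T mm m z Hn I1) as (t2 & Ht2 & HD).
  pose proof I1 as ((_ & _ & _ & Hmax & _ & _ & _ & _ & _ & _ & _ & _ & _ & _ & HSI) & _).
  destruct HSI as (_ & _ & _ & _ & Hsound & [Hq0 _] & _ & Hcyc).
  destruct HD as [(HT & m2 & z2 & E2 & Hno) | (HT & m2 & z2 & E2 & I2)].
  - exists (t1 + t2)%nat. split; [lia|]. rewrite run_add, E1, E2.
    pose proof (rejection_sound _ _ _ _ _ _ _ _ _ _ Hw0 Hw I1 HT) as Hnone.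
    split; [reflexivity|]. unfold out_yes; cbn [im]; rewrite Hno.
    split; [split; [discriminate|contradiction]|discriminate].
  - destruct (acceptance_correct n w0 w mm q T m2 z2 Hw0 Hw Hn Hmax Hsound Hq0 Hcyc HT I2)
      as (t3 & Ht3 & Hok).
    exists (t1 + t2 + t3)%nat. split; [lia|]. rewrite !run_add, E1, E2. exact Hok.
Qed.

Theorem theorem4 :
  exists (prog : list instr) (C : nat),
    forall (n : nat) (w0 : R) (w : nat -> R),
      0 < w0 -> (forall i, (i < n)%nat -> 0 < w i) ->
      exists t : nat,
        (t <= C * (n + 1))%nat /\
        let s := run prog t (star_input n w0 w) in
        halted prog s /\
        (out_yes s <-> has_weighted_star_rep n w0 w) /\
        (out_yes s ->
           is_weighted_star_rep n w0 w (out_c0 s) (out_r0 s) (out_c s) (out_r s)).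
Proof.
  exists prog, 200%nat. intros n w0 w Hw0 Hw.
  destruct n as [|n].
  - destruct (empty_star_correct w0 w) as (t & Ht & Hok). exists t. split; [lia|exact Hok].
  - exact (nonempty_star_correct (S n) w0 w Hw0 Hw ltac:(lia)).
Qed.
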